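(* The map $\Psi\colon A\times J\to\widehat\Pi_C$, $\Psi((y,s),t)=\iota_t(\Psi_t(y,s))$, is a slice-preserving homeomorphism. In particular, each $\Psi_t\colon A\to\hat D_t\setminus\hat I_t$ is a homeomorphism.
   Context: Setup: $I=[-1,1]$, $J=(1,2]$, $f_t(x)=\min(t(x-1)+3,\,t(1-x)-1)$. $S$ is the circle of radius 2 with angular coordinate $y$; $D$ is the disk of radius 2 with coordinates $(y,s)\in S\times[0,1]$ (from a smooth embedding of the mapping cylinder of $y\mapsto\cos y$), $(y,0)=y\in S$, $(y,1)=\cos y\in I\subset D$. $\Upsilon(y,s)=(y,2s)$ for $s\le1/2$, $(y,1)$ for $s\ge1/2$. An unwrapping is a continuously varying (in $t$) family of orientation-preserving near-homeomorphisms $\bar f_t\colon D\to D$ with $\bar f_t$ injective on $I$, $\bar f_t(I)\subset\{s\ge1/2\}$, $\Upsilon\circ\bar f_t|_I=f_t$, the second coordinate of $\bar f_t(y,s)$ equal to $s$ for $s\le1/2$; assume moreover $\bar f_t=\mathrm{id}$ on $S\times[0,3/4]$. $H_t=\Upsilon\circ\bar f_t$, $\hat D_t=\varprojlim(D,H_t)$, $\hat I_t=\varprojlim(I,f_t)\subset\hat D_t$. Let $\Pi=D\times J$, $H(z,t)=(H_t(z),t)$, $\widehat\Pi=\varprojlim(\Pi,H)$ (threads $\langle w_0,w_1,\dots\rangle$ with $H(w_{n+1})=w_n$, product topology), and $\iota_t\colon\hat D_t\to\widehat\Pi$, $\langle z_0,z_1,\dots\rangle\mapsto\langle(z_0,t),(z_1,t),\dots\rangle$;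 let $\widehat\Pi_C=\widehat\Pi\setminus\bigsqcup_{t\in J}\iota_t(\hat I_t)$. Let $A=S\times[0,\infty)$ and define $\Psi_t\colon A\to\hat D_t\setminus\hat I_t$: for $s\in[0,1)$, $\Psi_t(y,s)=\langle(y,s),(y,s/2),(y,s/4),\dots\rangle$; for $s\ge1$, with $k=\lfloor s\rfloor$, $v=(s-k+1)/2$, $\Psi_t(y,s)=\langle z_0,z_1,\dots\rangle$ where $z_{k-j}=H_t^{\,j}(y,v)$ ($1\le j\le k$), $z_k=(y,v)$, $z_{k+j}=(y,v/2^j)$ ($j\ge1$). Slice-preserving means $\Psi(A\times\{t\})\subset\iota_t(\hat D_t)$. *)

From Stdlib Require Import Reals Lra Lia ZArith Arith ClassicalEpsilon.
Open Scope R_scope.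

Definition dR (a b : R) : R := Rabs (a - b).
Definition dprod {X Y : Type} (dX : X -> X -> R) (dY : Y -> Y -> R)
  (a b : X * Y) : R := Rmax (dX (fst a) (fst b)) (dY (snd a) (snd b)).
(* max-metric on R^2 (induces the standard topology) *)
Definition d2 : (R * R) -> (R * R) -> R := dprod dR dR.

Definition nbM {X : Type} (d : X -> X -> R) (x : X) (V : X -> Prop) : Prop :=
  exists eps, 0 < eps /\ forall y, d x y < eps -> V y.

(* V is a neighbourhood of the sequence w in the PRODUCT topology on
   nat -> Y, each factor carrying the topology of d
   (basic open sets: finitely many coordinates in balls). *)
Definition nbSeq {Y : Type} (d : Y -> Y -> R) (w : nat -> Y) (V : (nat -> Y) -> Prop)
  : Prop :=
  exists (N : nat) (eps : R), 0 < eps /\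
    forall w', (forall n, (n <= N)%nat -> d (w n) (w' n) < eps) -> V w'.

Definition cont_on {X Y : Type} (nbX : X -> (X -> Prop) -> Prop)
  (nbY : Y -> (Y -> Prop) -> Prop) (A : X -> Prop) (f : X -> Y) : Prop :=
  forall x, A x -> forall V, nbY (f x) V ->
    exists U, nbX x U /\ forall x', A x' -> U x' -> V (f x').

Definition homeo_on {X Y : Type} (nbX : X -> (X -> Prop) -> Prop)
  (nbY : Y -> (Y -> Prop) -> Prop) (A : X -> Prop) (B : Y -> Prop) (f : X -> Y)
  : Prop :=
  (forall x, A x -> B (f x)) /\
  cont_on nbX nbY A f /\
  exists g : Y -> X,
    (forall y, B y -> A (g y) /\ f (g y) = y) /\
    (forall x, A x -> g (f x) = x) /\
    cont_on nbY nbX B g.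

Definition Jint (t : R) : Prop := 1 < t <= 2.
Definition Iint (x : R) : Prop := -1 <= x <= 1.
(* the circle S of radius 2 (a point p of S stands for its angular coordinate y) *)
Definition onS (p : R * R) : Prop := fst p ^ 2 + snd p ^ 2 = 4.
Definition inD (z : R * R) : Prop := fst z ^ 2 + snd z ^ 2 <= 4.

Definition ft (t x : R) : R := Rmin (t * (x - 1) + 3) (t * (1 - x) - 1).

(* phi p s is the point with coordinates (y,s), p = (2 cos y, 2 sin y).
   phi is an embedding of the mapping cylinder of y |-> cos y onto D:
   continuous on S x [0,1], onto D, (y,0) = y, and its only identifications
   are (y,1) ~ (y',1) iff cos y = cos y'. *)
Definition cyl_embedding (phi : R * R -> R -> R * R) : Prop :=
  cont_on (nbM (dprod d2 dR)) (nbM d2)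
    (fun q => onS (fst q) /\ 0 <= snd q <= 1) (fun q => phi (fst q) (snd q)) /\
  (forall p, onS p -> phi p 0 = p) /\
  (forall p s, onS p -> 0 <= s <= 1 -> inD (phi p s)) /\
  (forall z, inD z -> exists p s, onS p /\ 0 <= s <= 1 /\ phi p s = z) /\
  (forall p p' s s', onS p -> onS p' -> 0 <= s <= 1 -> 0 <= s' <= 1 ->
     (phi p s = phi p' s' <->
      ((p = p' /\ s = s') \/ (s = 1 /\ s' = 1 /\ fst p = fst p')))).

(* the arc I inside D, and its identification with [-1,1]:  (y,1) = cos y *)
Definition inI (phi : R * R -> R -> R * R) (z : R * R) : Prop :=
  exists p, onS p /\ z = phi p 1.
Definition jI (phi : R * R -> R -> R * R) (x : R) : R * R :=
  phi (2 * x, 2 * sqrt (1 - x ^ 2)) 1.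

(* Upsilon(y,s) = (y, min(2s,1)), read off via the coordinates *)
Definition Ups (phi : R * R -> R -> R * R) (z : R * R) : R * R :=
  let q := epsilon (inhabits ((0, 0), 0))
             (fun q : (R * R) * R =>
                onS (fst q) /\ 0 <= snd q <= 1 /\ phi (fst q) (snd q) = z) in
  phi (fst q) (Rmin (2 * snd q) 1).

Definition homeoD (h : R * R -> R * R) : Prop :=
  homeo_on (nbM d2) (nbM d2) inD inD h.

(* orientation preserving: the boundary circle is mapped with degree +1 *)
Definition OP_homeoD (h : R * R -> R * R) : Prop :=
  homeoD h /\
  exists theta : R -> R, continuity theta /\
    (forall a, theta (a + 2 * PI) = theta a + 2 * PI) /\
    (forall a, h (2 * cos a, 2 * sin a) = (2 * cos (theta a), 2 * sin (theta a))).

Definition OP_near_homeoD (g : R * R -> R * R) : Prop :=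
  (forall z, inD z -> inD (g z)) /\
  forall eps, 0 < eps -> exists h, OP_homeoD h /\
    forall z, inD z -> d2 (g z) (h z) < eps.

Definition unwrapping (phi : R * R -> R -> R * R) (fb : R -> R * R -> R * R) : Prop :=
  cont_on (nbM (dprod dR d2)) (nbM d2)
    (fun q => Jint (fst q) /\ inD (snd q)) (fun q => fb (fst q) (snd q)) /\
  forall t, Jint t ->
    OP_near_homeoD (fb t) /\
    (forall z z', inI phi z -> inI phi z' -> fb t z = fb t z' -> z = z') /\
    (forall z, inI phi z ->
       exists p s, onS p /\ 1/2 <= s <= 1 /\ fb t z = phi p s) /\
    (forall x, Iint x -> Ups phi (fb t (jI phi x)) = jI phi (ft t x)) /\
    (forall p s, onS p -> 0 <= s <= 1/2 ->
       exists p', onS p' /\ fb t (phi p s) = phi p' s).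

Definition Hmap (phi : R * R -> R -> R * R) (fb : R -> R * R -> R * R) (t : R)
  (z : R * R) : R * R := Ups phi (fb t z).

Definition Dhat phi fb (t : R) (z : nat -> R * R) : Prop :=
  forall n, inD (z n) /\ Hmap phi fb t (z (S n)) = z n.

(* iota_t (Ihat_t): threads of the inverse limit of (I, f_t), viewed in Dhat_t *)
Definition Ihat phi (t : R) (z : nat -> R * R) : Prop :=
  exists x : nat -> R,
    (forall n, Iint (x n) /\ ft t (x (S n)) = x n) /\
    (forall n, z n = jI phi (x n)).

Definition Hbig phi fb (w : (R * R) * R) : (R * R) * R :=
  (Hmap phi fb (snd w) (fst w), snd w).

Definition Pihat phi fb (w : nat -> (R * R) * R) : Prop :=
  forall n, inD (fst (w n)) /\ Jint (snd (w n)) /\ Hbig phi fb (w (S n)) = w n.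

Definition iota (t : R) (z : nat -> R * R) : nat -> (R * R) * R :=
  fun n => (z n, t).

Definition PihatC phi fb (w : nat -> (R * R) * R) : Prop :=
  Pihat phi fb w /\
  ~ (exists t z, Jint t /\ Dhat phi fb t z /\ Ihat phi t z /\ w = iota t z).

Definition inA (a : (R * R) * R) : Prop := onS (fst a) /\ 0 <= snd a.

Definition Psit phi fb (t : R) (a : (R * R) * R) : nat -> R * R :=
  let p := fst a in
  let s := snd a in
  if Rlt_dec s 1 then (fun n => phi p (s / 2 ^ n))
  else
    let k := Z.to_nat (Int_part s) in
    let v := (s - INR k + 1) / 2 in
    fun n => if (n <=? k)%nat then Nat.iter (k - n) (Hmap phi fb t) (phi p v)
             else phi p (v / 2 ^ (n - k)).

Definition inAJ (b : ((R * R) * R) * R) : Prop := inA (fst b) /\ Jint (snd b).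

Definition Psi phi fb (b : ((R * R) * R) * R) : nat -> (R * R) * R :=
  iota (snd b) (Psit phi fb (snd b) (fst b)).

Definition nbA := nbM (dprod d2 dR).
Definition nbAJ := nbM (dprod (dprod d2 dR) dR).
Definition nbPi := nbSeq (dprod d2 dR).
Definition nbDh := nbSeq d2.

From Stdlib Require Import Reals Lra Lia ZArith ClassicalEpsilon Classical FunctionalExtensionality.
Open Scope R_scope.

(* Points of D are written phi y s with (y,s) in the cylinder C = S x [0,1];
   C is sequentially compact, so phi is a closed quotient map: the level s is
   uniformly continuous on D, Upsilon (which doubles levels) is continuous, and
   nearby points of D have nearby coordinates below level 1.

   The heart of the argument is the key lemma [fb_low_preimage]: fb_t has no
   preimage of a point of level < 1/2 other than the point itself.  (A
   preimage above level 3/4 contradicts the intermediate value theorem applied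
   to the inverse of an orientation-preserving homeomorphism close to fb_t.)
   Consequently H_t^{-1}(y,r) = (y,r/2) for r < 1, so a thread of D_t is
   determined by any one of its coordinates of level < 1.

   Psi_t(y,s) is such a thread; its n-th coordinate is (y, rescale s / 2^n)
   for n >= floor s, where [rescale] is an increasing bijection of [0,oo).
   Conversely a thread of D_t outside I_t has a coordinate (y, r) of level
   r < 1/2 at some index M, and (y, unscale (2^M r)) is its preimage.  Each
   coordinate of Psi_t(y,s) is continuous in (t,y,s), strip by strip in s; the
   inverse depends continuously on a single coordinate.  These facts give that
   Psi_t and Psi are homeomorphisms onto their images. *)

Definition extraction (f : nat -> nat) : Prop := forall n, (f n < f (S n))%nat.

Lemma extraction_ge f : extraction f -> forall n, (n <= f n)%nat.
Proof. intros Hf n; induction n; [lia|]. specialize (Hf n); lia. Qed.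

Lemma extraction_comp f g : extraction f -> extraction g -> extraction (fun n => f (g n)).
Proof.
  intros Hf Hg n.
  assert (Hmono : forall a b, (a < b)%nat -> (f a < f b)%nat).
  { intros a b Hab; induction Hab; [apply Hf|]. specialize (Hf m); lia. }
  apply Hmono, Hg.
Qed.

Lemma Un_cv_extract u l f : extraction f -> Un_cv u l -> Un_cv (fun n => u (f n)) l.
Proof.
  intros Hf H e He. destruct (H e He) as [N HN]. exists N. intros n Hn.
  apply HN. pose proof (extraction_ge f Hf n). lia.
Qed.

Lemma Un_cv_const c : Un_cv (fun _ => c) c.
Proof. intros e He. exists O. intros n _. unfold Rdist. rewrite Rminus_diag, Rabs_R0. lra. Qed.

Lemma Rabs_le_inv a b : Rabs a <= b -> - b <= a <= b.
Proof. intros H. pose proof (Rle_abs a). pose proof (Rle_abs (- a)). rewrite Rabs_Ropp in *. lra. Qed.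

Lemma bounded_extraction (u : nat -> R) (M : R) : (forall n, Rabs (u n) <= M) ->
  exists f l, extraction f /\ Un_cv (fun n => u (f n)) l.
Proof.
  intros HM.
  destruct (Bolzano_Weierstrass u (fun c => -M <= c <= M) (compact_P3 _ _)) as [l Hl].
  { intros n. apply Rabs_le_inv, HM. }
  assert (Hnear : forall k N, exists p, (N <= p)%nat /\ Rabs (u p - l) < / INR (S k)).
  { intros k N.
    assert (Hpos : 0 < / INR (S k)) by (apply Rinv_0_lt_compat, lt_0_INR; lia).
    destruct (Hl (fun x => Rabs (x - l) < / INR (S k)) N) as [p [Hp Hv]]; eauto.
    exists (mkposreal _ Hpos). intros x Hx. exact Hx. }
  set (pick := fun k N => proj1_sig (constructive_indefinite_description _ (Hnear k N))).
  assert (Hpick : forall k N, (N <= pick k N)%nat /\ Rabs (u (pick k N) - l) < / INR (S k)).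
  { intros k N. unfold pick. destruct (constructive_indefinite_description _ _). auto. }
  set (f := fix f n := match n with O => pick O O | S m => pick (S m) (S (f m)) end).
  exists f, l. split.
  - intros n. simpl. destruct (Hpick (S n) (S (f n))). lia.
  - intros e He. destruct (archimed_cor1 e He) as [N [HN HN0]].
    exists N. intros n Hn.
    assert (Hn' : Rabs (u (f n) - l) < / INR (S n)) by (destruct n; apply Hpick).
    unfold Rdist. eapply Rlt_le_trans; [exact Hn'|].
    apply Rle_trans with (/ INR N); [|lra].
    apply Rinv_le_contravar; [apply lt_0_INR; lia | apply le_INR; lia].
Qed.

Definition converges {X : Type} (d : X -> X -> R) (u : nat -> X) (x : X) : Prop :=
  forall e, 0 < e -> exists N, forall n, (N <= n)%nat -> d x (u n) < e.

Lemma converges_extract {X : Type} (d : X -> X -> R) u x f :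
  extraction f -> converges d u x -> converges d (fun n => u (f n)) x.
Proof.
  intros Hf H e He. destruct (H e He) as [N HN]. exists N. intros n Hn.
  apply HN. pose proof (extraction_ge f Hf n). lia.
Qed.

Lemma scale_witnesses {X : Type} (Q : R -> X -> Prop) :
  (forall d, 0 < d -> exists x, Q d x) -> exists u : nat -> X, forall n, Q (/ INR (S n)) (u n).
Proof.
  intros H.
  assert (Hpos : forall n, 0 < / INR (S n)) by (intros; apply Rinv_0_lt_compat, lt_0_INR; lia).
  exists (fun n => proj1_sig (constructive_indefinite_description _ (H _ (Hpos n)))).
  intros n. destruct (constructive_indefinite_description _ _). auto.
Qed.

Lemma inv_succ_small e : 0 < e -> exists N, forall n, (N <= n)%nat -> / INR (S n) < e.
Proof.
  intros He. destruct (archimed_cor1 e He) as [N [HN HN0]]. exists N. intros n Hn.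
  eapply Rle_lt_trans; [|exact HN].
  apply Rinv_le_contravar; [apply lt_0_INR; lia | apply le_INR; lia].
Qed.

Lemma Rmax_lt_iff a b e : Rmax a b < e <-> a < e /\ b < e.
Proof.
  split; [|intros [? ?]; apply Rmax_lub_lt; auto].
  intros H; split; eapply Rle_lt_trans; eauto; [apply Rmax_l | apply Rmax_r].
Qed.

Lemma dR_sym a b : dR a b = dR b a.
Proof. apply Rabs_minus_sym. Qed.

Lemma dR_tri a b c : dR a c <= dR a b + dR b c.
Proof. unfold dR. replace (a - c) with ((a - b) + (b - c)) by ring. apply Rabs_triang. Qed.

Lemma dR_ge0 a b : 0 <= dR a b.
Proof. apply Rabs_pos. Qed.

Lemma d2_sym a b : d2 a b = d2 b a.
Proof. unfold d2, dprod. rewrite (dR_sym (fst a)), (dR_sym (snd a)). reflexivity. Qed.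

Lemma d2_tri a b c : d2 a c <= d2 a b + d2 b c.
Proof.
  unfold d2, dprod. apply Rmax_lub.
  - eapply Rle_trans; [apply dR_tri|]. apply Rplus_le_compat; apply Rmax_l.
  - eapply Rle_trans; [apply dR_tri|]. apply Rplus_le_compat; apply Rmax_r.
Qed.

Lemma d2_ge0 a b : 0 <= d2 a b.
Proof. unfold d2, dprod. eapply Rle_trans; [apply dR_ge0 | apply Rmax_l]. Qed.

Lemma d2_refl a : d2 a a = 0.
Proof. unfold d2, dprod, dR. rewrite !Rminus_diag, Rabs_R0, Rmax_left; lra. Qed.

Lemma d2_small_eq a b : (forall e, 0 < e -> d2 a b < e) -> a = b.
Proof.
  intros H. destruct a as [a1 a2], b as [b1 b2].
  assert (Hcoord : forall x y, (forall e, 0 < e -> dR x y < e) -> x = y).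
  { intros x y Hxy. destruct (Req_dec x y) as [|Hn]; auto.
    assert (0 < Rabs (x - y)) by (apply Rabs_pos_lt; lra).
    specialize (Hxy _ H0). unfold dR in Hxy. lra. }
  f_equal; apply Hcoord; intros e He; specialize (H e He);
    unfold d2, dprod in H; simpl in H; apply Rmax_lt_iff in H; tauto.
Qed.

Lemma converges_close_eq u v a b : converges d2 u a -> converges d2 v b ->
  (forall e, 0 < e -> exists N, forall n, (N <= n)%nat -> d2 (u n) (v n) < e) -> a = b.
Proof.
  intros Hu Hv Huv. apply d2_small_eq. intros e He.
  destruct (Hu (e/3)) as [N1 H1]; [lra|]. destruct (Hv (e/3)) as [N2 H2]; [lra|].
  destruct (Huv (e/3)) as [N3 H3]; [lra|].
  set (n := (N1 + N2 + N3)%nat).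
  specialize (H1 n ltac:(lia)). specialize (H2 n ltac:(lia)). specialize (H3 n ltac:(lia)).
  pose proof (d2_tri a (u n) b). pose proof (d2_tri (u n) (v n) b).
  pose proof (d2_sym (v n) b). lra.
Qed.

Lemma nbM_ball {X : Type} (d : X -> X -> R) x e : 0 < e -> nbM d x (fun y => d x y < e).
Proof. intros He. exists e. split; auto. Qed.

Lemma cont_on_metric {X Y : Type} (dX : X -> X -> R) (dY : Y -> Y -> R) A f :
  cont_on (nbM dX) (nbM dY) A f <->
  (forall x, A x -> forall e, 0 < e -> exists d, 0 < d /\
     forall x', A x' -> dX x x' < d -> dY (f x) (f x') < e).
Proof.
  split.
  - intros H x Hx e He.
    destruct (H x Hx _ (nbM_ball dY (f x) e He)) as [U [[d [Hd HU]] HV]].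
    exists d. split; auto.
  - intros H x Hx V [e [He HV]]. destruct (H x Hx e He) as [d [Hd Hd']].
    exists (fun x' => dX x x' < d). split; [apply nbM_ball; auto|].
    intros x' Hx' Hu. apply HV. auto.
Qed.

Lemma common_radius (P : nat -> R -> Prop) :
  (forall n d d', 0 < d' <= d -> P n d -> P n d') ->
  forall N, (forall n, (n <= N)%nat -> exists d, 0 < d /\ P n d) ->
  exists d, 0 < d /\ forall n, (n <= N)%nat -> P n d.
Proof.
  intros Hmono N. induction N; intros Hex.
  - destruct (Hex O (le_n _)) as [d [Hd HP]]. exists d. split; auto.
    intros n Hn. replace n with O by lia. auto.
  - destruct IHN as [d1 [Hd1 HP1]]. { intros n Hn. apply Hex. lia. }
    destruct (Hex (S N) (le_n _)) as [d2' [Hd2 HP2]].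
    pose proof (Rmin_l d1 d2'). pose proof (Rmin_r d1 d2'). pose proof (Rmin_pos _ _ Hd1 Hd2).
    exists (Rmin d1 d2'). split; auto.
    intros n Hn. destruct (Nat.eq_dec n (S N)) as [->|Hne].
    + apply (Hmono _ d2'); auto; lra.
    + apply (Hmono _ d1); [lra|]. apply HP1. lia.
Qed.

(** * The cylinder [C = S x [0,1]] and its sequential compactness *)

Definition inC (c : (R * R) * R) : Prop := onS (fst c) /\ 0 <= snd c <= 1.
Definition d3 : (R * R) * R -> (R * R) * R -> R := dprod d2 dR.

Lemma onS_bound p : onS p -> Rabs (fst p) <= 2 /\ Rabs (snd p) <= 2.
Proof.
  unfold onS. destruct p as [x y]; simpl. intros H.
  split; apply Rabs_le; split; nra.
Qed.

Lemma C_seq_compact (a : nat -> (R * R) * R) : (forall n, inC (a n)) ->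
  exists f c, extraction f /\ inC c /\ converges d3 (fun n => a (f n)) c.
Proof.
  intros Ha.
  destruct (bounded_extraction (fun n => fst (fst (a n))) 2) as [f1 [l1 [Hf1 Hc1]]].
  { intros n. apply (proj1 (onS_bound _ (proj1 (Ha n)))). }
  destruct (bounded_extraction (fun n => snd (fst (a (f1 n)))) 2) as [f2 [l2 [Hf2 Hc2]]].
  { intros n. apply (proj2 (onS_bound _ (proj1 (Ha _)))). }
  destruct (bounded_extraction (fun n => snd (a (f1 (f2 n)))) 1) as [f3 [l3 [Hf3 Hc3]]].
  { intros n. destruct (Ha (f1 (f2 n))) as [_ H]. apply Rabs_le; lra. }
  set (f := fun n => f1 (f2 (f3 n))).
  assert (Hf23 : extraction (fun n => f2 (f3 n))) by (apply extraction_comp; auto).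
  assert (C1 : Un_cv (fun n => fst (fst (a (f n)))) l1) by (apply (Un_cv_extract _ _ _ Hf23 Hc1)).
  assert (C2 : Un_cv (fun n => snd (fst (a (f n)))) l2) by (apply (Un_cv_extract _ _ _ Hf3 Hc2)).
  exists f, ((l1, l2), l3). split; [exact (extraction_comp f1 _ Hf1 Hf23)|]. split; [split|].
  - unfold onS. simpl.
    apply (UL_sequence (fun n => fst (fst (a (f n))) ^ 2 + snd (fst (a (f n))) ^ 2)).
    + simpl. apply CV_plus; apply CV_mult; auto; apply CV_mult; auto; apply Un_cv_const.
    + eapply Un_cv_ext; [|apply (Un_cv_const 4)]. intros n. symmetry. apply (Ha (f n)).
  - simpl. split.
    + apply (@Rle_cv_lim (fun _ => 0) (fun n => snd (a (f n))) 0 l3);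
        [intros n; apply (Ha (f n)) | apply Un_cv_const | exact Hc3].
    + apply (@Rle_cv_lim (fun n => snd (a (f n))) (fun _ => 1) l3 1);
        [intros n; apply (Ha (f n)) | exact Hc3 | apply Un_cv_const].
  - intros e He. destruct (C1 e He) as [N1 H1]. destruct (C2 e He) as [N2 H2].
    destruct (Hc3 e He) as [N3 H3].
    exists (N1 + N2 + N3)%nat. intros n Hn. unfold d3, d2, dprod. simpl.
    repeat apply Rmax_lub_lt; unfold dR; rewrite Rabs_minus_sym;
      [apply H1 | apply H2 | apply H3]; lia.
Qed.

Lemma continuity_of_eps_delta F :
  (forall x e, 0 < e -> exists d, 0 < d /\ forall y, Rabs (y - x) < d -> Rabs (F y - F x) < e) ->
  continuity F.
Proof.
  intros H x e He. destruct (H x e He) as [d [Hd Hd']]. exists d. split; [lra|].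
  intros y [_ Hy]. apply Hd'. exact Hy.
Qed.

Lemma onS_angle q : onS q -> exists a, q = (2 * cos a, 2 * sin a).
Proof.
  intros Hq. destruct q as [x y]. unfold onS in Hq; simpl in Hq.
  assert (Hb : -1 <= x / 2 <= 1) by (split; nra).
  assert (Hy2 : (y / 2) ^ 2 = 1 - (x / 2)²) by (unfold Rsqr; field_simplify; lra).
  destruct (Rle_dec 0 y).
  - exists (acos (x / 2)). rewrite cos_acos, sin_acos by auto. f_equal; [field|].
    rewrite <- Hy2, sqrt_pow2; [field | lra].
  - exists (- acos (x / 2)). rewrite cos_neg, sin_neg, cos_acos, sin_acos by auto.
    f_equal; [field|].
    rewrite <- Hy2. replace ((y / 2) ^ 2) with ((- (y / 2)) ^ 2) by ring.
    rewrite sqrt_pow2; [field | lra].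
Qed.

Lemma degree_one_lift_onto (theta : R -> R) : continuity theta ->
  (forall a, theta (a + 2 * PI) = theta a + 2 * PI) -> forall a0, exists a, theta a = a0.
Proof.
  intros Hc Hp a0. set (m := theta 0).
  assert (Hpos : forall n, theta (2 * PI * INR n) = m + 2 * PI * INR n).
  { induction n; [simpl; rewrite Rmult_0_r, Rplus_0_r; auto|].
    rewrite S_INR. replace (2 * PI * (INR n + 1)) with (2 * PI * INR n + 2 * PI) by ring.
    rewrite Hp, IHn. ring. }
  assert (Hneg : forall n, theta (- (2 * PI * INR n)) = m - 2 * PI * INR n).
  { induction n; [simpl; rewrite Rmult_0_r, Ropp_0; unfold m; ring|].
    rewrite S_INR. pose proof (Hp (- (2 * PI * (INR n + 1)))) as E.
    replace (- (2 * PI * (INR n + 1)) + 2 * PI) with (- (2 * PI * INR n)) in E by ring.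
    rewrite IHn in E. lra. }
  pose proof PI_RGT_0.
  (* choose n with 2 pi n > |m - a0| + 1 *)
  destruct (archimed ((Rabs (m - a0) + 1) / (2 * PI))) as [Hu _].
  pose proof (Rabs_pos (m - a0)).
  assert (Hq : 0 < (Rabs (m - a0) + 1) / (2 * PI)) by (apply Rdiv_lt_0_compat; lra).
  set (n := Z.to_nat (up ((Rabs (m - a0) + 1) / (2 * PI)))).
  assert (Hn : (Rabs (m - a0) + 1) / (2 * PI) < INR n).
  { unfold n. rewrite INR_IZR_INZ, Z2Nat.id; auto. apply le_IZR. lra. }
  assert (Hn2 : Rabs (m - a0) + 1 < 2 * PI * INR n).
  { apply (Rmult_lt_compat_l (2 * PI)) in Hn; [|lra]. field_simplify in Hn; lra. }
  assert (Hab : m - a0 <= Rabs (m - a0) /\ a0 - m <= Rabs (m - a0)).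
  { split; [apply Rle_abs | rewrite Rabs_minus_sym; apply Rle_abs]. }
  destruct (IVT (fun a => theta a - a0) (- (2 * PI * INR n)) (2 * PI * INR n)) as [a [_ Ha]].
  - apply continuity_minus; [auto | apply continuity_const; intros ? ?; auto].
  - lra.
  - simpl. rewrite Hneg. lra.
  - simpl. rewrite Hpos. lra.
  - exists a. lra.
Qed.

(** * Powers of two and the level reparametrization *)

Lemma pow2_pos n : 0 < 2 ^ n.
Proof. apply pow_lt; lra. Qed.

Lemma pow2_ge n : INR n + 1 <= 2 ^ n.
Proof.
  induction n; [simpl; lra|]. rewrite S_INR. simpl.
  pose proof (pow2_pos n). pose proof (pos_INR n). lra.
Qed.

Lemma pow2_le m n : (m <= n)%nat -> 2 ^ m <= 2 ^ n.
Proof. intros. apply Rle_pow; [lra | lia]. Qed.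

Lemma pow2_split m n : (m <= n)%nat -> 2 ^ n = 2 ^ (n - m) * 2 ^ m.
Proof. intros. rewrite <- pow_add. f_equal. lia. Qed.

Lemma div_pow2_nonneg a n : 0 <= a -> 0 <= a / 2 ^ n.
Proof. intros. unfold Rdiv. apply Rmult_le_pos; [auto | left; apply Rinv_0_lt_compat, pow2_pos]. Qed.

Lemma div_pow2_lt a b n : a < b * 2 ^ n -> a / 2 ^ n < b.
Proof.
  intros H. pose proof (pow2_pos n). apply (Rmult_lt_reg_r (2 ^ n)); auto.
  unfold Rdiv. rewrite Rmult_assoc, Rinv_l, Rmult_1_r by lra. exact H.
Qed.

Lemma div_pow2_le a b n : a <= b * 2 ^ n -> a / 2 ^ n <= b.
Proof.
  intros H. pose proof (pow2_pos n). apply (Rmult_le_reg_r (2 ^ n)); auto.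
  unfold Rdiv. rewrite Rmult_assoc, Rinv_l, Rmult_1_r by lra. exact H.
Qed.

Lemma div_pow2_unit r j : 0 <= r < 1 -> 0 <= r / 2 ^ j < 1.
Proof.
  intros Hr. split; [apply div_pow2_nonneg; lra|]. apply div_pow2_lt.
  pose proof (pow2_ge j). pose proof (pos_INR j). nra.
Qed.

Definition flr (s : R) : nat := Z.to_nat (Int_part s).

Lemma flr_spec s : 0 <= s -> INR (flr s) <= s < INR (flr s) + 1.
Proof.
  intros Hs. destruct (base_Int_part s) as [H1 H2].
  assert (Hz : (0 <= Int_part s)%Z).
  { unfold Int_part. destruct (archimed s). assert (0 < up s)%Z by (apply lt_IZR; lra). lia. }
  unfold flr. rewrite INR_IZR_INZ, Z2Nat.id; auto. lra.
Qed.

Lemma flr_unique s k : INR k <= s < INR k + 1 -> flr s = k.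
Proof.
  intros [H1 H2]. unfold flr, Int_part.
  assert (up s = (Z.of_nat k + 1)%Z).
  { symmetry. apply tech_up; rewrite plus_IZR, <- INR_IZR_INZ; simpl; lra. }
  rewrite H. replace (Z.of_nat k + 1 - 1)%Z with (Z.of_nat k) by ring. apply Nat2Z.id.
Qed.

Lemma flr_ge1 s : 1 <= s -> (1 <= flr s)%nat.
Proof. intros Hs. pose proof (flr_spec s ltac:(lra)). destruct (flr s); simpl in *; lia || lra. Qed.

Lemma flr_lt1 s : 0 <= s < 1 -> flr s = O.
Proof. intros. apply flr_unique. simpl. lra. Qed.

(* The piecewise-affine increasing bijection [0,oo) -> [0,oo) that records the
   level of Psi_t(y,s) rescaled by 2^n: the n-th coordinate of Psi_t(y,s) is
   (y, rescale s / 2^n) as soon as n >= flr s.  It maps [k, k+1] onto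
   [2^(k-1), 2^k] for k >= 1. *)
Definition rescale (s : R) : R :=
  if Rlt_dec s 1 then s else (s - INR (flr s) + 1) * 2 ^ (flr s - 1).

Lemma rescale_lo s : s < 1 -> rescale s = s.
Proof. intros. unfold rescale. destruct Rlt_dec; lra. Qed.

Lemma rescale_hi s : 1 <= s -> 2 ^ (flr s - 1) <= rescale s < 2 ^ flr s.
Proof.
  intros Hs. unfold rescale. destruct Rlt_dec; [lra|]. pose proof (flr_spec s ltac:(lra)).
  pose proof (flr_ge1 s Hs). pose proof (pow2_pos (flr s - 1)).
  rewrite (pow2_split (flr s - 1) (flr s)) by lia.
  replace (flr s - (flr s - 1))%nat with 1%nat by lia. simpl. split; nra.
Qed.

Lemma rescale_bounds s : 0 <= s -> 0 <= rescale s < 2 ^ flr s.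
Proof.
  intros Hs. destruct (Rlt_dec s 1).
  - rewrite rescale_lo, flr_lt1 by lra. simpl. lra.
  - pose proof (rescale_hi s ltac:(lra)). pose proof (pow2_pos (flr s - 1)). lra.
Qed.

Lemma rescale_mono s s' : 0 <= s -> s < s' -> rescale s < rescale s'.
Proof.
  intros Hs Hss.
  destruct (Rlt_dec s' 1); [rewrite !rescale_lo; lra|].
  destruct (Rlt_dec s 1).
  { rewrite rescale_lo by lra. pose proof (rescale_hi s' ltac:(lra)).
    pose proof (pow2_le 0 (flr s' - 1) ltac:(lia)). simpl in *. lra. }
  pose proof (flr_spec s ltac:(lra)). pose proof (flr_spec s' ltac:(lra)).
  assert (Hk : (flr s <= flr s')%nat).
  { destruct (le_lt_dec (flr s) (flr s')) as [|Hlt]; auto.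
    apply (le_INR (S (flr s'))) in Hlt. rewrite S_INR in Hlt. lra. }
  destruct (Nat.eq_dec (flr s) (flr s')) as [E|Ne].
  - unfold rescale. do 2 (destruct Rlt_dec; [lra|]). rewrite E in *.
    pose proof (pow2_pos (flr s' - 1)). apply Rmult_lt_compat_r; lra.
  - pose proof (rescale_hi s ltac:(lra)). pose proof (rescale_hi s' ltac:(lra)).
    pose proof (pow2_le (flr s) (flr s' - 1) ltac:(lia)). lra.
Qed.

Lemma rescale_mono_le s s' : 0 <= s -> s <= s' -> rescale s <= rescale s'.
Proof. intros H1 H2. destruct (Req_dec s s'); [subst; lra|]. left; apply rescale_mono; lra. Qed.

Lemma rescale_inj s s' : 0 <= s -> 0 <= s' -> rescale s = rescale s' -> s = s'.
Proof.
  intros H1 H2 E. destruct (Rtotal_order s s') as [Hl|[Hl|Hl]]; auto.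
  - pose proof (rescale_mono s s' H1 Hl); lra.
  - pose proof (rescale_mono s' s H2 Hl); lra.
Qed.

Lemma rescale_onto x : 0 <= x -> exists s, 0 <= s /\ rescale s = x.
Proof.
  intros Hx. destruct (Rlt_dec x 1); [exists x; split; [auto | apply rescale_lo; lra]|].
  assert (Hex : exists n, x < 2 ^ n).
  { destruct (archimed x) as [Hu _]. exists (Z.to_nat (up x)).
    pose proof (pow2_ge (Z.to_nat (up x))) as Hp.
    rewrite INR_IZR_INZ, Z2Nat.id in Hp; [lra|]. apply le_IZR. lra. }
  destruct (dec_inh_nat_subset_has_unique_least_element (fun n => x < 2 ^ n))
    as [k [[Hk Hmin] _]]; [intros m; apply classic | auto |].
  assert (Hk1 : (1 <= k)%nat) by (destruct k; simpl in Hk; lia || lra).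
  assert (Hk2 : 2 ^ (k - 1) <= x).
  { apply Rnot_lt_le. intros Hc. specialize (Hmin _ Hc). lia. }
  pose proof (pow2_pos (k - 1)).
  rewrite (pow2_split (k - 1) k) in Hk by lia.
  replace (k - (k - 1))%nat with 1%nat in Hk by lia. simpl in Hk.
  set (s := INR k - 1 + x / 2 ^ (k - 1)).
  assert (Ex : x / 2 ^ (k - 1) * 2 ^ (k - 1) = x) by (field; lra).
  assert (Hq : 1 <= x / 2 ^ (k - 1) < 2).
  { split.
    - apply (Rmult_le_reg_r (2 ^ (k - 1))); auto. rewrite Ex. lra.
    - apply (Rmult_lt_reg_r (2 ^ (k - 1))); auto. rewrite Ex. lra. }
  assert (Hkf : flr s = k) by (apply flr_unique; unfold s; lra).
  apply le_INR in Hk1. simpl in Hk1.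
  exists s. split; [unfold s; lra|].
  unfold rescale. destruct Rlt_dec; [unfold s in *; lra|].
  rewrite Hkf. unfold s. field. lra.
Qed.

Definition unscale (x : R) : R := epsilon (inhabits 0) (fun s => 0 <= s /\ rescale s = x).

Lemma unscale_spec x : 0 <= x -> 0 <= unscale x /\ rescale (unscale x) = x.
Proof. intros Hx. unfold unscale. apply epsilon_spec, rescale_onto, Hx. Qed.

Lemma unscale_rescale s : 0 <= s -> unscale (rescale s) = s.
Proof.
  intros Hs. destruct (unscale_spec (rescale s)) as [H1 H2]; [apply rescale_bounds, Hs|].
  apply rescale_inj; auto.
Qed.

(* A monotone bijection has a continuous inverse. *)
Lemma unscale_cont x0 : 0 <= x0 -> forall e, 0 < e -> exists d, 0 < d /\
  forall x, 0 <= x -> Rabs (x - x0) < d -> Rabs (unscale x - unscale x0) < e.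
Proof.
  intros Hx0 e He. destruct (unscale_spec x0 Hx0) as [Hs0 Hl0]. set (s0 := unscale x0) in *.
  assert (Hup : x0 < rescale (s0 + e)) by (rewrite <- Hl0; apply rescale_mono; lra).
  (* below: a margin [x0 - rescale (s0 - e)] if s0 - e >= 0, none needed otherwise *)
  set (lo := if Rlt_dec (s0 - e) 0 then 1 else x0 - rescale (s0 - e)).
  assert (Hlo : 0 < lo).
  { unfold lo. destruct Rlt_dec; [lra|]. rewrite <- Hl0 at 1.
    assert (rescale (s0 - e) < rescale s0) by (apply rescale_mono; lra). lra. }
  exists (Rmin (rescale (s0 + e) - x0) lo). split; [apply Rmin_pos; lra|].
  intros x Hx Hd. destruct (unscale_spec x Hx) as [A1 A2].
  pose proof (Rmin_l (rescale (s0 + e) - x0) lo). pose proof (Rmin_r (rescale (s0 + e) - x0) lo).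
  apply Rabs_def2 in Hd. apply Rabs_def1.
  - apply Rnot_le_lt. intros Hc.
    assert (rescale (s0 + e) <= rescale (unscale x)) by (apply rescale_mono_le; lra). lra.
  - apply Rnot_le_lt. intros Hc. unfold lo in *. destruct Rlt_dec; [lra|].
    assert (rescale (unscale x) <= rescale (s0 - e)) by (apply rescale_mono_le; lra). lra.
Qed.

Lemma jI_onS x : Iint x -> onS (2 * x, 2 * sqrt (1 - x ^ 2)).
Proof.
  intros [H1 H2]. unfold onS. cbn [fst snd].
  assert (Er : sqrt (1 - x ^ 2) * sqrt (1 - x ^ 2) = 1 - x ^ 2) by (apply sqrt_sqrt; nra).
  replace ((2 * x) ^ 2 + (2 * sqrt (1 - x ^ 2)) ^ 2)
    with (4 * x ^ 2 + 4 * (sqrt (1 - x ^ 2) * sqrt (1 - x ^ 2))) by ring.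
  rewrite Er. ring.
Qed.

Lemma ft_I t x : Jint t -> Iint x -> Iint (ft t x).
Proof. intros [Ht1 Ht2] [Hx1 Hx2]. unfold ft, Iint, Rmin. destruct Rle_dec; split; nra. Qed.

Section Unwrapping.
Variable phi : R * R -> R -> R * R.
Variable fb : R -> R * R -> R * R.
Hypothesis Hphi : cyl_embedding phi.
Hypothesis Hunw : unwrapping phi fb.
Hypothesis Hid : forall t p s, Jint t -> onS p -> 0 <= s <= 3/4 -> fb t (phi p s) = phi p s.

Definition Phi (c : (R * R) * R) : R * R := phi (fst c) (snd c).

Lemma Phi_cont c : inC c -> forall e, 0 < e -> exists d, 0 < d /\
  forall c', inC c' -> d3 c c' < d -> d2 (Phi c) (Phi c') < e.
Proof. destruct Hphi as [H _]. rewrite cont_on_metric in H. intros Hc. apply H, Hc. Qed.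

Lemma Phi_D c : inC c -> inD (Phi c).
Proof. destruct Hphi as [_ [_ [H _]]]. intros [? ?]. apply H; auto. Qed.

Lemma Phi_onto z : inD z -> exists c, inC c /\ Phi c = z.
Proof.
  destruct Hphi as [_ [_ [_ [H _]]]]. intros Hz.
  destruct (H z Hz) as [p [s [? [? ?]]]]. exists (p, s). split; [split|]; auto.
Qed.

Lemma Phi_inj c c' : inC c -> inC c' -> Phi c = Phi c' ->
  c = c' \/ (snd c = 1 /\ snd c' = 1 /\ fst (fst c) = fst (fst c')).
Proof.
  destruct Hphi as [_ [_ [_ [_ H]]]]. intros [? ?] [? ?] E.
  destruct (proj1 (H _ _ _ _ H0 H2 H1 H3) E) as [[E1 E2]|E3]; [left|right; auto].
  destruct c, c'; simpl in *; subst; auto.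
Qed.

Lemma Phi_level c c' : inC c -> inC c' -> Phi c = Phi c' -> snd c = snd c'.
Proof. intros H1 H2 E. destruct (Phi_inj c c' H1 H2 E) as [->|[? [? ?]]]; congruence. Qed.

Lemma Phi_low c c' : inC c -> inC c' -> Phi c = Phi c' -> snd c < 1 -> c = c'.
Proof. intros H1 H2 E Hl. destruct (Phi_inj c c' H1 H2 E) as [->|[? [? ?]]]; auto. lra. Qed.

Lemma Phi_top p p' : onS p -> onS p' -> fst p = fst p' -> phi p 1 = phi p' 1.
Proof. destruct Hphi as [_ [_ [_ [_ H]]]]. intros Hp Hp' E. apply (H p p' 1 1); auto; lra. Qed.

Lemma phi_0 p : onS p -> phi p 0 = p.
Proof. destruct Hphi as [_ [H _]]. auto. Qed.

Lemma phi_D p s : onS p -> 0 <= s <= 1 -> inD (phi p s).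
Proof. destruct Hphi as [_ [_ [H _]]]. auto. Qed.

Lemma phi_cont p0 s0 : onS p0 -> 0 <= s0 <= 1 -> forall e, 0 < e -> exists d, 0 < d /\
  forall p s, onS p -> 0 <= s <= 1 -> d2 p0 p < d -> Rabs (s0 - s) < d ->
  d2 (phi p0 s0) (phi p s) < e.
Proof.
  intros Hp Hs e He. destruct (Phi_cont (p0, s0) (conj Hp Hs) e He) as [d [Hd Hd']].
  exists d. split; auto. intros p s Hp' Hs' H1 H2. apply (Hd' (p, s)); [split; auto|].
  apply Rmax_lub_lt; auto.
Qed.

Lemma converges_Phi u c : inC c -> (forall n, inC (u n)) -> converges d3 u c ->
  converges d2 (fun n => Phi (u n)) (Phi c).
Proof.
  intros Hc Hu Hcv e He. destruct (Phi_cont c Hc e He) as [d [Hd Hd']].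
  destruct (Hcv d Hd) as [N HN]. exists N. intros n Hn. apply Hd'; auto.
Qed.

(* By compactness of C, the level is uniformly continuous on D. *)
Lemma level_uniform_C e : 0 < e -> exists d, 0 < d /\ forall c c', inC c -> inC c' ->
  d2 (Phi c) (Phi c') < d -> Rabs (snd c - snd c') < e.
Proof.
  intros He. apply NNPP. intros Hn.
  assert (Hw : forall d, 0 < d -> exists cc : ((R * R) * R) * ((R * R) * R),
     inC (fst cc) /\ inC (snd cc) /\ d2 (Phi (fst cc)) (Phi (snd cc)) < d /\
     e <= Rabs (snd (fst cc) - snd (snd cc))).
  { intros d Hd. apply NNPP. intros Hn2. apply Hn. exists d. split; auto.
    intros c c' H1 H2 H3. apply Rnot_le_lt. intros H4. apply Hn2. exists (c, c'). auto. }
  destruct (scale_witnesses _ Hw) as [u Hu].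
  destruct (C_seq_compact (fun n => fst (u n))) as [f [a [Hf [Ha Hcv]]]]; [intros; apply Hu|].
  destruct (C_seq_compact (fun n => snd (u (f n)))) as [g [b [Hg [Hb Hcv2]]]]; [intros; apply Hu|].
  assert (Hcv1 := converges_extract _ _ _ _ Hg Hcv).
  (* the two limits have the same image, hence the same level *)
  assert (Hab : Phi a = Phi b).
  { apply (converges_close_eq (fun n => Phi (fst (u (f (g n))))) (fun n => Phi (snd (u (f (g n)))))).
    - apply converges_Phi; auto. intros; apply Hu.
    - apply converges_Phi; auto. intros; apply Hu.
    - intros e' He'. destruct (inv_succ_small e' He') as [N HN]. exists N. intros n Hnn.
      eapply Rlt_trans; [apply Hu|]. apply HN.
      pose proof (extraction_ge _ Hf (g n)). pose proof (extraction_ge _ Hg n). lia. }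
  pose proof (Phi_level a b Ha Hb Hab) as Hl.
  destruct (Hcv1 (e/2)) as [N1 H1]; [lra|]. destruct (Hcv2 (e/2)) as [N2 H2]; [lra|].
  specialize (H1 (N1 + N2)%nat ltac:(lia)). specialize (H2 (N1 + N2)%nat ltac:(lia)).
  apply Rmax_lt_iff in H1 as [_ H1]. apply Rmax_lt_iff in H2 as [_ H2].
  pose proof (proj2 (proj2 (proj2 (Hu (f (g (N1 + N2)%nat)))))) as H3. simpl in H3.
  unfold dR in H1, H2. rewrite Hl in H1.
  set (x := snd (fst (u (f (g (N1 + N2)%nat))))) in *.
  set (y := snd (snd (u (f (g (N1 + N2)%nat))))) in *.
  assert (Rabs (x - y) <= Rabs (snd b - x) + Rabs (snd b - y)).
  { replace (x - y) with (- (snd b - x) + (snd b - y)) by ring.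
    eapply Rle_trans; [apply Rabs_triang|]. rewrite Rabs_Ropp. lra. }
  lra.
Qed.

(* By compactness of C, points of D near [Phi c0] have coordinates near some
   coordinates of [Phi c0]. *)
Lemma Phi_lift_near c0 : inC c0 -> forall e, 0 < e -> exists d, 0 < d /\ forall c, inC c ->
  d2 (Phi c0) (Phi c) < d -> exists c1, inC c1 /\ Phi c1 = Phi c0 /\ d3 c1 c < e.
Proof.
  intros Hc0 e He. apply NNPP. intros Hn.
  assert (Hw : forall d, 0 < d -> exists c, inC c /\ d2 (Phi c0) (Phi c) < d /\
       forall c1, inC c1 -> Phi c1 = Phi c0 -> e <= d3 c1 c).
  { intros d Hd. apply NNPP. intros Hn2. apply Hn. exists d. split; auto.
    intros c H1 H2. apply NNPP. intros Hn3. apply Hn2. exists c. do 2 (split; auto).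
    intros c1 H4 H5. apply Rnot_lt_le. intros H6. apply Hn3. eauto. }
  destruct (scale_witnesses _ Hw) as [u Hu].
  destruct (C_seq_compact u) as [f [a [Hf [Ha Hcv]]]]; [intros; apply Hu|].
  assert (Hab : Phi c0 = Phi a).
  { apply (converges_close_eq (fun n => Phi c0) (fun n => Phi (u (f n)))).
    - intros e' He'. exists O. intros. rewrite d2_refl. lra.
    - apply converges_Phi; auto. intros; apply Hu.
    - intros e' He'. destruct (inv_succ_small e' He') as [N HN]. exists N. intros n Hnn.
      eapply Rlt_trans; [apply Hu|]. apply HN. pose proof (extraction_ge _ Hf n). lia. }
  destruct (Hcv e He) as [N HN]. specialize (HN N (le_n _)).
  pose proof (proj2 (proj2 (Hu (f N))) a Ha (eq_sym Hab)). lra.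
Qed.

(* Chosen coordinates of a point of D; the same choice as in the definition of Ups. *)
Definition coords (z : R * R) : (R * R) * R :=
  epsilon (inhabits ((0, 0), 0))
     (fun q : (R * R) * R => onS (fst q) /\ 0 <= snd q <= 1 /\ phi (fst q) (snd q) = z).

Definition level (z : R * R) : R := snd (coords z).

Lemma coords_spec z : inD z -> inC (coords z) /\ Phi (coords z) = z.
Proof.
  intros Hz. destruct (Phi_onto z Hz) as [[p s] [[Hp Hs] Ec]].
  destruct (epsilon_spec (inhabits ((0, 0), 0))
     (fun q : (R * R) * R => onS (fst q) /\ 0 <= snd q <= 1 /\ phi (fst q) (snd q) = z))
    as [H1 [H2 H3]]; [exists (p, s); auto|].
  split; [split|]; auto.
Qed.

Lemma point_coords z : inD z -> z = phi (fst (coords z)) (level z).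
Proof. intros Hz. symmetry. apply (coords_spec z Hz). Qed.

Lemma level_range z : inD z -> 0 <= level z <= 1.
Proof. intros Hz. apply (coords_spec z Hz). Qed.

Lemma level_Phi c : inC c -> level (Phi c) = snd c.
Proof.
  intros Hc. destruct (coords_spec (Phi c)) as [H1 H2]; [apply Phi_D; auto|].
  apply Phi_level; auto.
Qed.

Lemma level_phi p s : onS p -> 0 <= s <= 1 -> level (phi p s) = s.
Proof. intros. apply (level_Phi (p, s)). split; auto. Qed.

Lemma coords_low p r : onS p -> 0 <= r < 1 -> coords (phi p r) = (p, r).
Proof.
  intros Hp Hr. destruct (coords_spec (phi p r)) as [H1 H2]; [apply phi_D; auto; lra|].
  symmetry. apply (Phi_low (p, r)); auto; simpl; [split; simpl; auto; lra | lra].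
Qed.

Lemma level_uniform e : 0 < e -> exists d, 0 < d /\ forall z z', inD z -> inD z' ->
  d2 z z' < d -> Rabs (level z - level z') < e.
Proof.
  intros He. destruct (level_uniform_C e He) as [d [Hd Hd']]. exists d. split; auto.
  intros z z' Hz Hz' Hzz.
  destruct (coords_spec z Hz) as [A1 A2]. destruct (coords_spec z' Hz') as [B1 B2].
  apply Hd'; auto. rewrite A2, B2; auto.
Qed.

Lemma level_jI x : Iint x -> level (jI phi x) = 1.
Proof. intros Hx. apply level_phi; [apply jI_onS; auto | lra]. Qed.

Lemma jI_inj a b : Iint a -> Iint b -> jI phi a = jI phi b -> a = b.
Proof.
  intros Ha Hb E. unfold jI in E.
  destruct (Phi_inj (2 * a, 2 * sqrt (1 - a ^ 2), 1) (2 * b, 2 * sqrt (1 - b ^ 2), 1))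
    as [E1|[_ [_ E1]]]; try (split; [apply jI_onS; auto | simpl; lra]); auto.
  - injection E1. lra.
  - simpl in E1. lra.
Qed.

Definition double_level (c : (R * R) * R) : (R * R) * R := (fst c, Rmin (2 * snd c) 1).

Lemma double_level_C c : inC c -> inC (double_level c).
Proof. intros [H1 H2]. split; simpl; auto. unfold Rmin; destruct Rle_dec; lra. Qed.

Lemma double_level_lip a b : d3 (double_level a) (double_level b) <= 2 * d3 a b.
Proof.
  unfold d3, dprod, double_level; simpl.
  pose proof (Rmax_l (d2 (fst a) (fst b)) (dR (snd a) (snd b))).
  pose proof (Rmax_r (d2 (fst a) (fst b)) (dR (snd a) (snd b))).
  pose proof (d2_ge0 (fst a) (fst b)). pose proof (dR_ge0 (snd a) (snd b)).
  apply Rmax_lub; [lra|].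
  assert (dR (Rmin (2 * snd a) 1) (Rmin (2 * snd b) 1) <= 2 * dR (snd a) (snd b)).
  { unfold dR, Rmin. destruct (Rle_dec (2 * snd a) 1), (Rle_dec (2 * snd b) 1);
      unfold Rabs; repeat destruct Rcase_abs; lra. }
  lra.
Qed.

Lemma Ups_Phi c : inC c -> Ups phi (Phi c) = Phi (double_level c).
Proof.
  intros Hc. change (Ups phi (Phi c)) with (Phi (double_level (coords (Phi c)))).
  destruct (coords_spec (Phi c)) as [H1 H2]; [apply Phi_D; auto|].
  set (c' := coords (Phi c)) in *.
  destruct (Phi_inj _ _ H1 Hc H2) as [->|[E1 [E2 E3]]]; [reflexivity|].
  unfold double_level, Phi; simpl. rewrite E1, E2.
  replace (Rmin (2 * 1) 1) with 1 by (unfold Rmin; destruct Rle_dec; lra).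
  apply Phi_top; [apply H1 | apply Hc | exact E3].
Qed.

Lemma Ups_phi p s : onS p -> 0 <= s <= 1 -> Ups phi (phi p s) = phi p (Rmin (2 * s) 1).
Proof. intros Hp Hs. apply (Ups_Phi (p, s)). split; auto. Qed.

Lemma Ups_D z : inD z -> inD (Ups phi z).
Proof.
  intros Hz. destruct (coords_spec z Hz) as [H1 H2].
  rewrite <- H2, Ups_Phi by auto. apply Phi_D, double_level_C, H1.
Qed.

(* Phi is a closed quotient map: a self-map of D that is induced through Phi by a
   continuous map of C is continuous. *)
Lemma cont_by_coords (g : R * R -> R * R) (F : (R * R) * R -> (R * R) * R) :
  (forall c, inC c -> inC (F c) /\ g (Phi c) = Phi (F c)) ->
  (forall c u, inC c -> (forall n, inC (u n)) -> converges d3 u c ->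
     converges d3 (fun n => F (u n)) (F c)) ->
  forall z0, inD z0 -> forall e, 0 < e -> exists d, 0 < d /\
    forall z, inD z -> d2 z0 z < d -> d2 (g z0) (g z) < e.
Proof.
  intros HF HFc z0 Hz0 e He. apply NNPP. intros Hn.
  assert (Hw : forall d, 0 < d -> exists z, inD z /\ d2 z0 z < d /\ e <= d2 (g z0) (g z)).
  { intros d Hd. apply NNPP. intros Hn2. apply Hn. exists d. split; auto.
    intros z H1 H2. apply Rnot_le_lt. intros H3. apply Hn2. eauto. }
  destruct (scale_witnesses _ Hw) as [u Hu].
  assert (Hcu : forall n, inC (coords (u n)) /\ Phi (coords (u n)) = u n)
    by (intros; apply coords_spec, Hu).
  destruct (C_seq_compact (fun n => coords (u n))) as [f [a [Hf [Ha Hcv]]]]; [apply Hcu|].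
  assert (Hza : z0 = Phi a).
  { apply (converges_close_eq (fun n => z0) (fun n => Phi (coords (u (f n))))).
    - intros e' He'. exists O. intros. rewrite d2_refl. lra.
    - apply converges_Phi; auto. intros; apply Hcu.
    - intros e' He'. destruct (inv_succ_small e' He') as [N HN]. exists N. intros n Hnn.
      rewrite (proj2 (Hcu (f n))).
      eapply Rlt_trans; [apply Hu|]. apply HN. pose proof (extraction_ge _ Hf n). lia. }
  assert (Hc2 : converges d2 (fun n => Phi (F (coords (u (f n))))) (Phi (F a))).
  { apply converges_Phi; [apply HF; auto | intros; apply HF, Hcu |].
    apply HFc; auto. intros; apply Hcu. }
  destruct (Hc2 e He) as [N HN]. specialize (HN N (le_n _)).
  rewrite <- (proj2 (HF _ (proj1 (Hcu (f N))))), (proj2 (Hcu (f N))) in HN.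
  rewrite <- (proj2 (HF _ Ha)), <- Hza in HN.
  pose proof (proj2 (proj2 (Hu (f N)))). lra.
Qed.

Lemma Ups_cont z0 : inD z0 -> forall e, 0 < e -> exists d, 0 < d /\
  forall z, inD z -> d2 z0 z < d -> d2 (Ups phi z0) (Ups phi z) < e.
Proof.
  apply (cont_by_coords (Ups phi) double_level).
  - intros c Hc. split; [apply double_level_C | apply Ups_Phi]; auto.
  - intros c u Hc Hu Hcv e He. destruct (Hcv (e/2)) as [N HN]; [lra|]. exists N. intros n Hn.
    eapply Rle_lt_trans; [apply double_level_lip|]. specialize (HN n Hn). lra.
Qed.

Lemma fb_D t z : Jint t -> inD z -> inD (fb t z).
Proof. intros Ht Hz. destruct Hunw as [_ H]. destruct (H t Ht) as [[H1 _] _]. auto. Qed.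

Lemma fb_cont t z : Jint t -> inD z -> forall e, 0 < e -> exists d, 0 < d /\
  forall t' z', Jint t' -> inD z' -> dR t t' < d -> d2 z z' < d -> d2 (fb t z) (fb t' z') < e.
Proof.
  intros Ht Hz e He. destruct Hunw as [H _]. rewrite cont_on_metric in H.
  destruct (H (t, z) (conj Ht Hz) e He) as [d [Hd Hd']]. exists d. split; auto.
  intros t' z' Ht' Hz' H1 H2. apply (Hd' (t', z')); [split; auto|]. apply Rmax_lub_lt; auto.
Qed.

Lemma fb_fix_low t z : Jint t -> inD z -> level z <= 3/4 -> fb t z = z.
Proof.
  intros Ht Hz Hl. destruct (coords_spec z Hz) as [[A1 A2] A3].
  rewrite <- A3. apply Hid; auto. unfold level in Hl. lra.
Qed.

Lemma H_D t z : Jint t -> inD z -> inD (Hmap phi fb t z).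
Proof. intros. apply Ups_D, fb_D; auto. Qed.

Lemma H_cont t z : Jint t -> inD z -> forall e, 0 < e -> exists d, 0 < d /\
  forall t' z', Jint t' -> inD z' -> dR t t' < d -> d2 z z' < d ->
  d2 (Hmap phi fb t z) (Hmap phi fb t' z') < e.
Proof.
  intros Ht Hz e He. destruct (Ups_cont (fb t z) (fb_D t z Ht Hz) e He) as [d1 [Hd1 H1]].
  destruct (fb_cont t z Ht Hz d1 Hd1) as [d [Hd H2]]. exists d. split; auto.
  intros. apply H1; [apply fb_D | apply H2]; auto.
Qed.

Lemma H_phi t p s : Jint t -> onS p -> 0 <= s <= 3/4 ->
  Hmap phi fb t (phi p s) = phi p (Rmin (2 * s) 1).
Proof. intros Ht Hp Hs. unfold Hmap. rewrite Hid by auto. apply Ups_phi; auto; lra. Qed.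

Lemma H_iter_D j t z : Jint t -> inD z -> inD (Nat.iter j (Hmap phi fb t) z).
Proof. intros Ht Hz. induction j; simpl; auto. apply H_D; auto. Qed.

Lemma H_iter_cont j t z : Jint t -> inD z -> forall e, 0 < e -> exists d, 0 < d /\
  forall t' z', Jint t' -> inD z' -> dR t t' < d -> d2 z z' < d ->
  d2 (Nat.iter j (Hmap phi fb t) z) (Nat.iter j (Hmap phi fb t') z') < e.
Proof.
  intros Ht Hz. induction j; intros e He; [exists e; split; auto|].
  simpl. destruct (H_cont t _ Ht (H_iter_D j t z Ht Hz) e He) as [d1 [Hd1 H1]].
  destruct (IHj d1 Hd1) as [d2' [Hd2 H2]].
  pose proof (Rmin_l d1 d2'). pose proof (Rmin_r d1 d2').
  exists (Rmin d1 d2'). split; [apply Rmin_pos; auto|].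
  intros t' z' Ht' Hz' Hdt Hdz. apply H1; [auto | apply H_iter_D; auto | lra | apply H2; auto; lra].
Qed.

Lemma OP_boundary_onto h : OP_homeoD h -> forall q, onS q -> exists x, onS x /\ h x = q.
Proof.
  intros [_ [theta [Hc [Hper Hbd]]]] q Hq.
  destruct (onS_angle q Hq) as [a0 ->].
  destruct (degree_one_lift_onto theta Hc Hper a0) as [a Ha].
  exists (2 * cos a, 2 * sin a). split; [|rewrite Hbd, Ha; reflexivity].
  unfold onS; simpl. pose proof (sin2_cos2 a) as Hsc. unfold Rsqr in Hsc. nra.
Qed.

Lemma level_along_radius g q r l : (forall z, inD z -> inD (g z)) ->
  cont_on (nbM d2) (nbM d2) inD g -> onS q -> 0 <= r <= 1 ->
  level (g (phi q 0)) < l < level (g (phi q r)) ->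
  exists sig, 0 <= sig <= r /\ level (g (phi q sig)) = l.
Proof.
  intros HgD Hgc Hq Hr Hl. rewrite cont_on_metric in Hgc.
  (* the radius, reparametrized by a clamp of R onto [0,1] *)
  set (clamp := fun x => Rmax 0 (Rmin x 1)).
  assert (Hclamp : forall x, 0 <= clamp x <= 1)
    by (intros; unfold clamp, Rmax, Rmin; repeat destruct Rle_dec; lra).
  assert (Hclip : forall x y, Rabs (clamp x - clamp y) <= Rabs (x - y))
    by (intros; unfold clamp, Rmax, Rmin; repeat destruct Rle_dec;
        unfold Rabs; repeat destruct Rcase_abs; lra).
  assert (Hsr : forall x, 0 <= clamp x * r <= 1) by (intros x; pose proof (Hclamp x); split; nra).
  set (F := fun x => level (g (phi q (clamp x * r))) - l).
  assert (HFc : continuity F).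
  { apply continuity_of_eps_delta. intros x e He.
    assert (HD : forall y, inD (phi q (clamp y * r))) by (intros; apply phi_D; auto).
    destruct (level_uniform e He) as [d1 [Hd1 HU]].
    destruct (Hgc _ (HD x) d1 Hd1) as [d2' [Hd2 Hgc']].
    destruct (phi_cont q (clamp x * r) Hq (Hsr x) d2' Hd2) as [d3' [Hd3 Hpc]].
    exists (d3' / (r + 1)). split; [apply Rdiv_lt_0_compat; lra|].
    intros y Hy. unfold F. rewrite Rabs_minus_sym.
    replace (level (g (phi q (clamp x * r))) - l - (level (g (phi q (clamp y * r))) - l))
      with (level (g (phi q (clamp x * r))) - level (g (phi q (clamp y * r)))) by ring.
    apply HU; [apply HgD, HD | apply HgD, HD|]. apply Hgc'; [apply HD|].
    apply Hpc; [auto | apply Hsr | rewrite d2_refl; lra |].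
    replace (clamp x * r - clamp y * r) with ((clamp x - clamp y) * r) by ring.
    rewrite Rabs_mult, (Rabs_right r) by lra.
    pose proof (Hclip x y). rewrite Rabs_minus_sym in Hy. pose proof (Rabs_pos (clamp x - clamp y)).
    assert (Rabs (x - y) * (r + 1) < d3').
    { apply (Rmult_lt_compat_r (r + 1)) in Hy; [|lra]. field_simplify in Hy; lra. }
    nra. }
  assert (E0 : clamp 0 * r = 0) by (unfold clamp, Rmax, Rmin; repeat destruct Rle_dec; lra).
  assert (E1 : clamp 1 * r = r) by (unfold clamp, Rmax, Rmin; repeat destruct Rle_dec; lra).
  destruct (IVT F 0 1 HFc ltac:(lra)) as [tau [_ Htau]];
    [unfold F; rewrite E0; lra | unfold F; rewrite E1; lra|].
  exists (clamp tau * r). split; [pose proof (Hclamp tau); nra | unfold F in Htau; lra].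
Qed.

(* Key lemma: if fb_t w lies below level 1/2, then w is that point.  Otherwise
   w lies above level 3/4; an orientation-preserving homeomorphism h close to
   fb_t has an inverse g that carries the radius of D ending at h w from level 0
   to level > 3/4, so a point v of level 5/8 is hit, and v = fb_t v is close
   to h v, which lies on that radius below level 9/16: a contradiction. *)
Lemma fb_low_preimage t w p r : Jint t -> inD w -> onS p -> 0 <= r < 1/2 ->
  fb t w = phi p r -> w = phi p r.
Proof.
  intros Ht Hw Hp Hr Efb.
  destruct (Rle_dec (level w) (3/4)) as [Hle|Hgt]; [rewrite <- Efb; symmetry; apply fb_fix_low; auto|].
  exfalso.
  destruct (level_uniform (1/16)) as [d1 [Hd1 HU]]; [lra|].
  destruct Hunw as [_ HW]. destruct (HW t Ht) as [[_ Hnear] _].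
  destruct (Hnear d1 Hd1) as [h [HOP Hclose]].
  pose proof HOP as [[hD [_ [g [Hg1 [Hg2 Hgc]]]]] _].
  assert (HhwD : inD (h w)) by auto.
  destruct (coords_spec (h w) HhwD) as [[Hq' Hr0] Ehw].
  set (q' := fst (coords (h w))) in *. set (r' := snd (coords (h w))) in *.
  assert (Hr' : r' < 9/16).
  { specialize (Hclose w Hw). rewrite Efb in Hclose.
    specialize (HU _ _ (phi_D p r Hp ltac:(lra)) HhwD Hclose).
    rewrite level_phi in HU by (auto; lra). change (level (h w)) with r' in HU.
    apply Rabs_def2 in HU. lra. }
  (* the radius starts at g q' on S and ends at g (h w) = w *)
  destruct (OP_boundary_onto h HOP q' Hq') as [x0 [Hx0 Hhx0]].
  assert (Hstart : level (g (phi q' 0)) = 0).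
  { rewrite phi_0, <- Hhx0, Hg2 by (auto; unfold inD; unfold onS in Hx0; lra).
    rewrite <- (phi_0 x0) at 1 by auto. apply level_phi; auto; lra. }
  assert (Hend : g (phi q' r') = w) by (change (phi q' r') with (Phi (coords (h w))); rewrite Ehw; auto).
  destruct (level_along_radius g q' r' (5/8) (fun z Hz => proj1 (Hg1 z Hz)) Hgc Hq' Hr0)
    as [sig [Hsig Hv]]; [rewrite Hstart, Hend; lra|].
  set (v := g (phi q' sig)) in *.
  assert (HvD : inD v) by (apply Hg1, phi_D; auto; lra).
  assert (Hhv : h v = phi q' sig) by (apply Hg1, phi_D; auto; lra).
  pose proof (Hclose v HvD) as Hc. rewrite fb_fix_low, Hhv in Hc by (auto; lra).
  specialize (HU _ _ HvD (phi_D q' sig Hq' ltac:(lra)) Hc).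
  rewrite Hv, level_phi in HU by (auto; lra). apply Rabs_def2 in HU. lra.
Qed.

(** * Threads of the inverse limit below level 1 *)

Lemma H_preimage_low t z p r : Jint t -> inD z -> onS p -> 0 <= r < 1 ->
  Hmap phi fb t z = phi p r -> z = phi p (r / 2).
Proof.
  intros Ht Hz Hp Hr E. unfold Hmap in E.
  destruct (coords_spec _ (fb_D t z Ht Hz)) as [Hc Ec].
  rewrite <- Ec, Ups_Phi in E by auto.
  assert (E2 : (p, r) = double_level (coords (fb t z))).
  { apply Phi_low; [split; simpl; auto; lra | apply double_level_C; auto | auto | simpl; lra]. }
  unfold double_level in E2. injection E2 as E3 E4.
  assert (E5 : 2 * snd (coords (fb t z)) = r) by (unfold Rmin in E4; destruct Rle_dec; lra).
  apply (fb_low_preimage t); auto; [lra|].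
  rewrite <- Ec. unfold Phi. rewrite <- E3. f_equal. lra.
Qed.

Lemma thread_tail t z M q r : Jint t -> Dhat phi fb t z -> onS q -> 0 <= r < 1 ->
  z M = phi q r -> forall j, z (M + j)%nat = phi q (r / 2 ^ j).
Proof.
  intros Ht Hz Hq Hr EM. induction j.
  - rewrite Nat.add_0_r, EM. f_equal. simpl. field.
  - destruct (Hz (M + j)%nat) as [_ E]. replace (S (M + j)) with (M + S j)%nat in E by lia.
    rewrite IHj in E. apply H_preimage_low in E; [|auto | apply Hz | auto | apply div_pow2_unit; auto].
    rewrite E. f_equal. simpl. field. pose proof (pow2_pos j). lra.
Qed.

Lemma thread_agree_before t a b M : Dhat phi fb t a -> Dhat phi fb t b -> a M = b M ->
  forall n, (n <= M)%nat -> a n = b n.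
Proof.
  intros Ha Hb E n Hn. remember (M - n)%nat as j. revert n Hn Heqj.
  induction j; intros n Hn Hj; [replace n with M by lia; auto|].
  destruct (Ha n) as [_ E1]. destruct (Hb n) as [_ E2]. rewrite <- E1, <- E2. f_equal. apply IHj; lia.
Qed.

Lemma threads_agree t a b M : Jint t -> Dhat phi fb t a -> Dhat phi fb t b -> a M = b M ->
  level (a M) < 1 -> a = b.
Proof.
  intros Ht Ha Hb E Hl. apply functional_extensionality. intros n.
  destruct (le_lt_dec n M); [apply (thread_agree_before t a b M); auto|].
  destruct (coords_spec (a M)) as [[Hc1 Hc2] Hc3]; [apply Ha|].
  pose proof (thread_tail t a M _ _ Ht Ha Hc1 (conj (proj1 Hc2) Hl) (eq_sym Hc3) (n - M)) as E1.
  pose proof (thread_tail t b M _ _ Ht Hb Hc1 (conj (proj1 Hc2) Hl)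
    (eq_trans (eq_sym E) (eq_sym Hc3)) (n - M)) as E2.
  replace (M + (n - M))%nat with n in E1, E2 by lia. congruence.
Qed.

Lemma Psit_lo t p s n : s < 1 -> Psit phi fb t (p, s) n = phi p (s / 2 ^ n).
Proof. intros Hs. unfold Psit; simpl. destruct Rlt_dec; [reflexivity | lra]. Qed.

Lemma Psit_hi t p s n : 1 <= s -> Psit phi fb t (p, s) n =
  if (n <=? flr s)%nat then Nat.iter (flr s - n) (Hmap phi fb t) (phi p ((s - INR (flr s) + 1) / 2))
  else phi p ((s - INR (flr s) + 1) / 2 / 2 ^ (n - flr s)).
Proof. intros Hs. unfold Psit; simpl. destruct Rlt_dec; [lra | reflexivity]. Qed.

Lemma Psit_tail t p s n : 0 <= s -> (flr s <= n)%nat ->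
  Psit phi fb t (p, s) n = phi p (rescale s / 2 ^ n).
Proof.
  intros Hs Hn. destruct (Rlt_dec s 1); [rewrite Psit_lo, rescale_lo by lra; auto|].
  pose proof (flr_ge1 s ltac:(lra)) as Hk.
  rewrite Psit_hi by lra. unfold rescale. destruct Rlt_dec; [lra|].
  pose proof (pow2_pos (flr s - 1)). pose proof (pow2_pos (n - flr s)).
  assert (E : 2 ^ n = 2 ^ (n - flr s) * (2 * 2 ^ (flr s - 1))).
  { change (2 * 2 ^ (flr s - 1)) with (2 ^ S (flr s - 1)).
    replace (S (flr s - 1)) with (flr s) by lia. apply pow2_split; auto. }
  destruct (Nat.leb_spec n (flr s)).
  - replace n with (flr s) in * by lia. rewrite Nat.sub_diag. simpl. f_equal.
    rewrite E, Nat.sub_diag. simpl. field. lra.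
  - f_equal. rewrite E. field. lra.
Qed.

Lemma tail_level s n : 0 <= s -> (flr s <= n)%nat -> 0 <= rescale s / 2 ^ n < 1.
Proof.
  intros Hs Hn. pose proof (rescale_bounds s Hs). pose proof (pow2_le _ _ Hn).
  split; [apply div_pow2_nonneg; lra | apply div_pow2_lt; lra].
Qed.

Lemma tail_level_half s n : 0 <= s -> (flr s < n)%nat -> rescale s / 2 ^ n < 1/2.
Proof.
  intros Hs Hn. pose proof (rescale_bounds s Hs). pose proof (pow2_le _ _ Hn) as Hp2.
  simpl in Hp2. apply div_pow2_lt. lra.
Qed.

Lemma Dhat_Psit t p s : Jint t -> onS p -> 0 <= s -> Dhat phi fb t (Psit phi fb t (p, s)).
Proof.
  intros Ht Hp Hs n. destruct (le_lt_dec (flr s) n) as [Hn|Hn].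
  - pose proof (tail_level s n Hs Hn). pose proof (tail_level s (S n) Hs ltac:(lia)).
    pose proof (tail_level_half s (S n) Hs ltac:(lia)).
    rewrite !Psit_tail by (auto; lia). split; [apply phi_D; auto; lra|].
    rewrite H_phi by (auto; lra). f_equal. pose proof (pow2_pos n).
    replace (2 * (rescale s / 2 ^ S n)) with (rescale s / 2 ^ n) by (simpl; field; lra).
    rewrite Rmin_left; lra.
  - assert (Hs1 : 1 <= s) by (apply Rnot_lt_le; intros Hc; rewrite flr_lt1 in Hn by lra; lia).
    pose proof (flr_spec s Hs).
    rewrite !Psit_hi, (proj2 (Nat.leb_le n (flr s))) by (auto; lia). split.
    + apply H_iter_D, phi_D; auto. split; lra.
    + destruct (Nat.leb_spec (S n) (flr s)); [|lia].
      replace (flr s - n)%nat with (S (flr s - S n)) by lia. reflexivity.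
Qed.

(* Psi_t(y,s) is not a thread of I: its coordinate flr s + 1 lies below level 1/2. *)
Lemma not_Ihat_Psit t p s : Jint t -> onS p -> 0 <= s -> ~ Ihat phi t (Psit phi fb t (p, s)).
Proof.
  intros Ht Hp Hs [x [Hx Ez]]. specialize (Ez (S (flr s))).
  rewrite Psit_tail in Ez by (auto; lia).
  pose proof (tail_level s (S (flr s)) Hs ltac:(lia)).
  pose proof (tail_level_half s (S (flr s)) Hs ltac:(lia)).
  assert (Hl1 : level (phi p (rescale s / 2 ^ S (flr s))) = 1) by (rewrite Ez; apply level_jI, Hx).
  rewrite level_phi in Hl1 by (auto; lra). lra.
Qed.

(** * The inverse of Psi_t *)

(* The angle and the level rescaled by 2^n of the n-th coordinate of a thread;
   along a thread these stabilize once the level drops below 1. *)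
Definition scaled_coords (z : nat -> R * R) (n : nat) : (R * R) * R :=
  (fst (coords (z n)), 2 ^ n * level (z n)).

(* The candidate inverse: read the stabilized scaled coordinates at the first
   chosen coordinate of level < 1/2 and undo the rescaling. *)
Definition Psit_inv (z : nat -> R * R) : (R * R) * R :=
  let M := epsilon (inhabits O) (fun n => level (z n) < 1/2) in
  (fst (scaled_coords z M), unscale (snd (scaled_coords z M))).

Lemma scaled_coords_tail t z M : Jint t -> Dhat phi fb t z -> level (z M) < 1 ->
  forall j, scaled_coords z (M + j) = scaled_coords z M.
Proof.
  intros Ht Hz Hl j. destruct (coords_spec (z M) (proj1 (Hz M))) as [[Hq Hr] Ec].
  assert (Hr' : 0 <= level (z M) < 1) by (unfold level in *; lra).
  pose proof (thread_tail t z M _ _ Ht Hz Hq Hr' (eq_sym Ec) j) as Ej.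
  pose proof (div_pow2_unit _ j Hr'). pose proof (pow2_pos j).
  unfold scaled_coords. rewrite Ej, coords_low, level_phi by (auto; lra). simpl.
  f_equal. rewrite pow_add. field. lra.
Qed.

Lemma scaled_coords_indep t z M M' : Jint t -> Dhat phi fb t z ->
  level (z M) < 1 -> level (z M') < 1 -> scaled_coords z M = scaled_coords z M'.
Proof.
  intros Ht Hz H1 H2. destruct (le_lt_dec M M').
  - replace M' with (M + (M' - M))%nat by lia. symmetry. apply (scaled_coords_tail t); auto.
  - replace M with (M' + (M - M'))%nat by lia. apply (scaled_coords_tail t); auto.
Qed.

Lemma Psit_inv_at t z M : Jint t -> Dhat phi fb t z -> level (z M) < 1/2 ->
  Psit_inv z = (fst (scaled_coords z M), unscale (snd (scaled_coords z M))).
Proof.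
  intros Ht Hz HM. unfold Psit_inv.
  pose proof (epsilon_spec (inhabits O) (fun n => level (z n) < 1/2) (ex_intro _ M HM)).
  rewrite (scaled_coords_indep t z _ M); auto; lra.
Qed.

(* A thread of D_t not in I_t has a coordinate below level 1/2: otherwise all its
   coordinates lie on I, and it is a thread of (I, f_t). *)
Lemma exists_low t z : Jint t -> Dhat phi fb t z -> ~ Ihat phi t z -> exists M, level (z M) < 1/2.
Proof.
  intros Ht Hz HI. destruct (classic (exists n, level (z n) < 1)) as [[n Hn]|Hno].
  - exists (S n). destruct (Hz n) as [_ E]. rewrite (point_coords (z n)) in E by apply Hz.
    pose proof (coords_spec (z n) (proj1 (Hz n))) as [[Hq Hr] _].
    apply H_preimage_low in E; [|auto | apply Hz | auto | unfold level in *; lra].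
    rewrite E, level_phi; auto; unfold level in *; lra.
  - exfalso. apply HI.
    assert (Hl1 : forall n, level (z n) = 1).
    { intros n. pose proof (level_range (z n) (proj1 (Hz n))).
      assert (~ level (z n) < 1) by (intros Hc; apply Hno; eauto). lra. }
    set (x := fun n => fst (fst (coords (z n))) / 2).
    assert (Hx : forall n, Iint (x n)).
    { intros n. pose proof (proj1 (proj1 (coords_spec (z n) (proj1 (Hz n))))) as Hq.
      destruct (onS_bound _ Hq) as [B _]. apply Rabs_le_inv in B. unfold x, Iint. lra. }
    assert (Ez : forall n, z n = jI phi (x n)).
    { intros n. rewrite (point_coords (z n)) at 1 by apply Hz. rewrite Hl1. unfold jI.
      apply Phi_top; [apply (coords_spec (z n) (proj1 (Hz n))) | apply jI_onS; auto |].
      unfold x; simpl. field. }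
    exists x. split; auto. intros n. split; auto.
    apply jI_inj; [apply ft_I; auto | auto |].
    destruct Hunw as [_ HW]. destruct (HW t Ht) as [_ [_ [_ [HU _]]]].
    rewrite <- HU, <- !Ez by auto. apply Hz.
Qed.

Lemma Psit_inv_A t z : Jint t -> Dhat phi fb t z -> ~ Ihat phi t z -> inA (Psit_inv z).
Proof.
  intros Ht Hz HI. destruct (exists_low t z Ht Hz HI) as [M HM].
  rewrite (Psit_inv_at t z M) by auto. unfold inA, scaled_coords; simpl. split.
  - apply (coords_spec (z M) (proj1 (Hz M))).
  - apply unscale_spec. pose proof (pow2_pos M). pose proof (level_range (z M) (proj1 (Hz M))). nra.
Qed.

Lemma Psit_inv_Psit t p s : Jint t -> onS p -> 0 <= s -> Psit_inv (Psit phi fb t (p, s)) = (p, s).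
Proof.
  intros Ht Hp Hs. set (M := S (flr s)).
  pose proof (tail_level s M Hs ltac:(unfold M; lia)).
  pose proof (tail_level_half s M Hs ltac:(unfold M; lia)).
  assert (EM : Psit phi fb t (p, s) M = phi p (rescale s / 2 ^ M)) by (apply Psit_tail; auto; unfold M; lia).
  rewrite (Psit_inv_at t _ M); [| auto | apply Dhat_Psit; auto | rewrite EM, level_phi; auto; lra].
  unfold scaled_coords, level. rewrite EM, coords_low by auto. cbn [fst snd]. f_equal.
  pose proof (pow2_pos M). replace (2 ^ M * (rescale s / 2 ^ M)) with (rescale s) by (field; lra).
  apply unscale_rescale; auto.
Qed.

Lemma Psit_Psit_inv t z : Jint t -> Dhat phi fb t z -> ~ Ihat phi t z -> Psit phi fb t (Psit_inv z) = z.
Proof.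
  intros Ht Hz HI. destruct (exists_low t z Ht Hz HI) as [M HM].
  rewrite (Psit_inv_at t z M) by auto. unfold scaled_coords; simpl.
  destruct (coords_spec (z M) (proj1 (Hz M))) as [[Hq Hr] Ec].
  set (q := fst (coords (z M))) in *. set (r := level (z M)) in *.
  pose proof (pow2_pos M).
  assert (Hx : 0 <= 2 ^ M * r) by (unfold r, level in *; nra).
  destruct (unscale_spec _ Hx) as [Hs Hls]. set (s := unscale (2 ^ M * r)) in *.
  assert (Hk : (flr s <= M)%nat).
  { destruct (Rlt_dec s 1); [rewrite flr_lt1; lia || lra|].
    pose proof (rescale_hi s ltac:(lra)). destruct (le_lt_dec (flr s) M); auto.
    pose proof (pow2_le M (flr s - 1) ltac:(lia)). nra. }
  symmetry. apply (threads_agree t z _ M); [auto | auto | apply Dhat_Psit; auto | | unfold r in HM; lra].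
  rewrite Psit_tail, Hls, (point_coords (z M)) by (auto; apply Hz). f_equal. unfold r. field. lra.
Qed.

(** * Continuity of the coordinates of Psi *)

(* On each closed strip [k <= s <= k+1], the n-th coordinate of Psi_t(y,s) is
   given by one formula, continuous in (t, y, s). *)
Definition Psit_piece (k n : nat) (t : R) (p : R * R) (s : R) : R * R :=
  match k with
  | O => phi p (s / 2 ^ n)
  | S _ => if (n <=? k)%nat then Nat.iter (k - n) (Hmap phi fb t) (phi p ((s - INR k + 1) / 2))
           else phi p ((s - INR k + 1) / 2 / 2 ^ (n - k))
  end.

(* The formula for the strip [k, k+1] remains valid at s = k+1, where Psi_t
   switches to the next strip, because H_t doubles levels below 1/2. *)
Lemma Psit_piece_right_end k n t p : Jint t -> onS p ->
  Psit phi fb t (p, INR k + 1) n = Psit_piece k n t p (INR k + 1).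
Proof.
  intros Ht Hp. pose proof (pos_INR k).
  assert (Hk : flr (INR k + 1) = S k) by (apply flr_unique; rewrite S_INR; lra).
  assert (Hhalf : Hmap phi fb t (phi p (1/2)) = phi p 1).
  { rewrite H_phi by (auto; lra). f_equal. unfold Rmin; destruct Rle_dec; lra. }
  rewrite Psit_hi, Hk, S_INR by lra.
  replace ((INR k + 1 - (INR k + 1) + 1) / 2) with (1/2) by field.
  destruct k as [|k']; simpl Psit_piece.
  - destruct n as [|[|n']]; simpl; [rewrite Hhalf; f_equal; field | f_equal; field |].
    f_equal. pose proof (pow2_pos n'). field. lra.
  - replace (INR (S k') + 1 - INR (S k') + 1) with 2 by ring.
    destruct (Nat.leb_spec n (S k')).
    + rewrite (proj2 (Nat.leb_le n (S (S k')))) by lia.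
      replace (S (S k') - n)%nat with (S (S k' - n)) by lia.
      rewrite Nat.iter_succ_r, Hhalf. f_equal. f_equal. field.
    + destruct (Nat.leb_spec n (S (S k'))).
      * replace n with (S (S k')) by lia. rewrite Nat.sub_diag.
        replace (S (S k') - S k')%nat with 1%nat by lia. simpl. f_equal. field.
      * replace (n - S k')%nat with (S (n - S (S k'))) by lia. simpl. f_equal.
        pose proof (pow2_pos (n - S (S k'))). field. lra.
Qed.

Lemma Psit_piece_eq k n t p s : Jint t -> onS p -> INR k <= s <= INR k + 1 ->
  Psit phi fb t (p, s) n = Psit_piece k n t p s.
Proof.
  intros Ht Hp [Hs1 Hs2]. pose proof (pos_INR k).
  destruct (Rlt_dec s (INR k + 1)) as [Hlt|Hge]; [|replace s with (INR k + 1) by lra;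
    apply Psit_piece_right_end; auto].
  assert (Hk : flr s = k) by (apply flr_unique; lra).
  destruct k as [|k']; [simpl in *; apply Psit_lo; lra|].
  rewrite Psit_hi, Hk; [reflexivity|]. rewrite S_INR in Hs1. pose proof (pos_INR k'). lra.
Qed.

Lemma phi_affine_cont a c p0 s0 : 1 <= c -> onS p0 -> 0 <= (s0 - a) / c <= 1 ->
  forall e, 0 < e -> exists d, 0 < d /\ forall p s, onS p -> 0 <= (s - a) / c <= 1 ->
  d2 p0 p < d -> Rabs (s0 - s) < d -> d2 (phi p0 ((s0 - a) / c)) (phi p ((s - a) / c)) < e.
Proof.
  intros Hc Hp Hs e He. destruct (phi_cont p0 _ Hp Hs e He) as [d [Hd Hd']].
  exists d. split; auto. intros p s Hp' Hs' H1 H2. apply Hd'; auto.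
  replace ((s0 - a) / c - (s - a) / c) with ((s0 - s) / c) by (field; lra).
  unfold Rdiv. rewrite Rabs_mult, Rabs_inv, (Rabs_right c) by lra.
  pose proof (Rabs_pos (s0 - s)). apply Rle_lt_trans with (Rabs (s0 - s) * 1); [|lra].
  apply Rmult_le_compat_l; auto. rewrite <- Rinv_1. apply Rinv_le_contravar; lra.
Qed.

(* On the strip [k, k+1] with k >= 1 the levels in the formula are (s - (k-1)) / c
   with c = 2 or c = 2^(n-k+1); both lie in [0,1]. *)
Lemma strip_level k c s : 2 <= c -> INR k <= s <= INR k + 1 -> 0 <= (s - (INR k - 1)) / c <= 1.
Proof.
  intros Hc Hs. split; [apply Rmult_le_pos; [lra | left; apply Rinv_0_lt_compat; lra]|].
  apply (Rmult_le_reg_r c); [lra|]. unfold Rdiv. rewrite Rmult_assoc, Rinv_l, Rmult_1_r by lra. lra.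
Qed.

Lemma Psit_piece_cont k n t0 p0 s0 : Jint t0 -> onS p0 -> INR k <= s0 <= INR k + 1 ->
  forall e, 0 < e -> exists d, 0 < d /\ forall t p s, Jint t -> onS p -> INR k <= s <= INR k + 1 ->
  Rabs (t0 - t) < d -> d2 p0 p < d -> Rabs (s0 - s) < d ->
  d2 (Psit_piece k n t0 p0 s0) (Psit_piece k n t p s) < e.
Proof.
  intros Ht0 Hp0 Hs0 e He. destruct k as [|k'].
  -
    simpl in *. pose proof (pow2_le 0 n ltac:(lia)). simpl in *.
    assert (Hsig : forall s, 0 <= s <= 0 + 1 -> 0 <= (s - 0) / 2 ^ n <= 1)
      by (intros s Hs; split; [apply div_pow2_nonneg | apply div_pow2_le]; lra).
    destruct (phi_affine_cont 0 (2 ^ n) p0 s0 ltac:(lra) Hp0 (Hsig s0 Hs0) e He) as [d [Hd Hd']].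
    exists d. split; auto. intros t p s Ht Hp Hs _ Q1 Q2.
    specialize (Hd' p s Hp (Hsig s Hs) Q1 Q2). rewrite !Rminus_0_r in Hd'. exact Hd'.
  - unfold Psit_piece. set (k := S k') in *. destruct (Nat.leb_spec n k).
    +
      assert (E2 : forall s, (s - INR k + 1) / 2 = (s - (INR k - 1)) / 2) by (intros; field).
      destruct (H_iter_cont (k - n) t0 _ Ht0 (phi_D p0 _ Hp0 (strip_level k 2 s0 ltac:(lra) Hs0)) e He)
        as [d1 [Hd1 HH]].
      destruct (phi_affine_cont (INR k - 1) 2 p0 s0 ltac:(lra) Hp0 (strip_level k 2 s0 ltac:(lra) Hs0)
        d1 Hd1) as [d2' [Hd2 Hd']].
      pose proof (Rmin_l d1 d2'). pose proof (Rmin_r d1 d2').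
      exists (Rmin d1 d2'). split; [apply Rmin_pos; auto|].
      intros t p s Ht Hp Hs Q1 Q2 Q3. rewrite !E2.
      pose proof (strip_level k 2 s ltac:(lra) Hs).
      apply HH; [auto | apply phi_D; auto | unfold dR; lra | apply Hd'; auto; lra].
    +
      assert (Hc : 2 <= 2 ^ S (n - k)) by (pose proof (pow2_le 0 (n - k) ltac:(lia)); simpl in *; lra).
      assert (E2 : forall s, (s - INR k + 1) / 2 / 2 ^ (n - k) = (s - (INR k - 1)) / 2 ^ S (n - k))
        by (intros; simpl; pose proof (pow2_pos (n - k)); field; lra).
      destruct (phi_affine_cont (INR k - 1) (2 ^ S (n - k)) p0 s0 ltac:(lra) Hp0 (strip_level k _ s0 Hc Hs0) e He)
        as [d [Hd Hd']].
      exists d. split; auto. intros t p s Ht Hp Hs Q1 Q2 Q3. rewrite !E2.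
      apply Hd'; auto. apply strip_level; auto.
Qed.
Lemma Psit_strip_cont k n t0 p0 s0 : Jint t0 -> onS p0 -> INR k <= s0 <= INR k + 1 ->
  forall e, 0 < e -> exists d, 0 < d /\ forall t p s, Jint t -> onS p -> INR k <= s <= INR k + 1 ->
  Rabs (t0 - t) < d -> d2 p0 p < d -> Rabs (s0 - s) < d ->
  d2 (Psit phi fb t0 (p0, s0) n) (Psit phi fb t (p, s) n) < e.
Proof.
  intros Ht0 Hp0 Hs0 e He. destruct (Psit_piece_cont k n t0 p0 s0 Ht0 Hp0 Hs0 e He) as [d [Hd Hc]].
  exists d. split; auto. intros t p s Ht Hp Hs Q1 Q2 Q3.
  rewrite !(Psit_piece_eq k) by auto. apply Hc; auto.
Qed.

(* Each coordinate of Psi_t(y,s) is jointly continuous in (t, y, s): near an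
   integer k >= 1 combine the strips [k-1, k] and [k, k+1], elsewhere use the
   strip of s0. *)
Lemma Psit_coord_cont n t0 p0 s0 : Jint t0 -> onS p0 -> 0 <= s0 ->
  forall e, 0 < e -> exists d, 0 < d /\ forall t p s, Jint t -> onS p -> 0 <= s ->
  Rabs (t0 - t) < d -> d2 p0 p < d -> Rabs (s0 - s) < d ->
  d2 (Psit phi fb t0 (p0, s0) n) (Psit phi fb t (p, s) n) < e.
Proof.
  intros Ht0 Hp0 Hs0 e He. set (k := flr s0). pose proof (flr_spec s0 Hs0) as Hk. fold k in Hk.
  destruct (classic (s0 = INR k /\ (1 <= k)%nat)) as [[E Hk1]|HB].
  - assert (Ek : INR (k - 1) = INR k - 1) by (rewrite minus_INR by lia; simpl; ring).
    destruct (Psit_strip_cont k n t0 p0 s0 Ht0 Hp0 ltac:(lra) e He) as [d1 [Hd1 C1]].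
    destruct (Psit_strip_cont (k - 1) n t0 p0 s0 Ht0 Hp0 ltac:(lra) e He) as [d2' [Hd2 C2]].
    pose proof (Rmin_l 1 (Rmin d1 d2')). pose proof (Rmin_r 1 (Rmin d1 d2')).
    pose proof (Rmin_l d1 d2'). pose proof (Rmin_r d1 d2').
    exists (Rmin 1 (Rmin d1 d2')). split; [repeat apply Rmin_pos; lra|].
    intros t p s Ht Hp Hs Q1 Q2 Q3. pose proof (Rabs_def2 _ _ Q3).
    destruct (Rle_dec (INR k) s); [apply C1 | apply C2]; auto; lra.
  - assert (Hcase : INR k < s0 \/ k = O).
    { destruct (Rlt_dec (INR k) s0); auto. right. destruct k; auto.
      exfalso. apply HB. split; [lra | lia]. }
    destruct (Psit_strip_cont k n t0 p0 s0 Ht0 Hp0 ltac:(lra) e He) as [d1 [Hd1 C1]].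
    (* the distance from s0 to the strip boundaries that s may cross *)
    set (gap := if Rlt_dec (INR k) s0 then s0 - INR k else 1).
    assert (Hgap : 0 < gap) by (unfold gap; destruct Rlt_dec; lra).
    pose proof (Rmin_l d1 (Rmin gap (INR k + 1 - s0))).
    pose proof (Rmin_r d1 (Rmin gap (INR k + 1 - s0))).
    pose proof (Rmin_l gap (INR k + 1 - s0)). pose proof (Rmin_r gap (INR k + 1 - s0)).
    exists (Rmin d1 (Rmin gap (INR k + 1 - s0))). split; [repeat apply Rmin_pos; lra|].
    intros t p s Ht Hp Hs Q1 Q2 Q3. pose proof (Rabs_def2 _ _ Q3).
    assert (Hsr : INR k <= s <= INR k + 1).
    { split; [|lra]. destruct Hcase as [Hc|Hc]; [|rewrite Hc; simpl; lra].
      unfold gap in *. destruct Rlt_dec; lra. }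
    apply C1; auto; lra.
Qed.

Lemma Psit_coords_cont t0 p0 s0 : Jint t0 -> onS p0 -> 0 <= s0 -> forall N e, 0 < e ->
  exists d, 0 < d /\ forall t p s, Jint t -> onS p -> 0 <= s ->
  Rabs (t0 - t) < d -> d2 p0 p < d -> Rabs (s0 - s) < d ->
  forall n, (n <= N)%nat -> d2 (Psit phi fb t0 (p0, s0) n) (Psit phi fb t (p, s) n) < e.
Proof.
  intros Ht0 Hp0 Hs0 N e He.
  destruct (common_radius (fun n d => forall t p s, Jint t -> onS p -> 0 <= s ->
     Rabs (t0 - t) < d -> d2 p0 p < d -> Rabs (s0 - s) < d ->
     d2 (Psit phi fb t0 (p0, s0) n) (Psit phi fb t (p, s) n) < e)) with (N := N) as [d [Hd HP]].
  - intros n d d' Hdd HP t p s Ht Hp Hs H1 H2 H3. apply HP; auto; lra.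
  - intros n _. apply Psit_coord_cont; auto.
  - exists d. auto.
Qed.

(* Psit_inv depends continuously on a single coordinate M of the thread (and
   not at all on t): nearby threads have their M-th coordinate at a level below
   1/2 and with nearby coordinates. *)
Lemma Psit_inv_cont t0 z0 : Jint t0 -> Dhat phi fb t0 z0 -> ~ Ihat phi t0 z0 ->
  exists M, forall e, 0 < e -> exists d, 0 < d /\ forall t z, Jint t -> Dhat phi fb t z ->
  d2 (z0 M) (z M) < d -> d3 (Psit_inv z0) (Psit_inv z) < e.
Proof.
  intros Ht0 Hz0 HI. destruct (exists_low t0 z0 Ht0 Hz0 HI) as [M HM].
  exists M. intros e He.
  destruct (coords_spec (z0 M) (proj1 (Hz0 M))) as [Hc0 Ec0].
  set (c0 := coords (z0 M)) in *. set (r0 := level (z0 M)) in *.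
  assert (Hr0 : 0 <= r0) by apply (level_range _ (proj1 (Hz0 M))).
  destruct (level_uniform (1/2 - r0)) as [d1 [Hd1 HU]]; [lra|].
  pose proof (pow2_pos M) as HpM.
  destruct (unscale_cont (2 ^ M * r0)) with (e := e) as [dm [Hdm Hun]]; [nra | auto |].
  set (e' := Rmin e (dm / 2 ^ M)).
  assert (He' : 0 < e') by (apply Rmin_pos; auto; apply Rdiv_lt_0_compat; auto).
  destruct (Phi_lift_near c0 Hc0 e' He') as [d2' [Hd2 Hlift]].
  pose proof (Rmin_l d1 d2'). pose proof (Rmin_r d1 d2').
  exists (Rmin d1 d2'). split; [apply Rmin_pos; auto|].
  intros t z Ht Hz Hd.
  assert (HzM : level (z M) < 1/2).
  { specialize (HU _ _ (proj1 (Hz0 M)) (proj1 (Hz M)) ltac:(lra)). apply Rabs_def2 in HU.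
    unfold r0 in *. lra. }
  rewrite (Psit_inv_at t0 z0 M), (Psit_inv_at t z M) by auto.
  destruct (coords_spec (z M) (proj1 (Hz M))) as [Hc Ec].
  destruct (Hlift (coords (z M)) Hc) as [c1 [Hc1 [E1 Hd3]]]; [rewrite Ec0, Ec; lra|].
  (* below level 1 the coordinates of z0 M are unique *)
  assert (c1 = c0).
  { apply Phi_low; auto. pose proof (Phi_level c1 c0 Hc1 Hc0 E1). change (snd c0 < 1/2) in HM. lra. }
  subst c1. apply Rmax_lt_iff in Hd3 as [Hq Hs].
  unfold scaled_coords, d3, dprod. cbn [fst snd]. apply Rmax_lub_lt.
  - eapply Rlt_le_trans; [exact Hq | apply Rmin_l].
  - unfold dR. rewrite Rabs_minus_sym. apply Hun.
    + pose proof (level_range _ (proj1 (Hz M))). nra.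
    + assert (Hx : Rabs (level (z M) - r0) < dm / 2 ^ M).
      { unfold r0, level. fold c0. rewrite Rabs_minus_sym. unfold dR in Hs.
        eapply Rlt_le_trans; [exact Hs | apply Rmin_r]. }
      replace (2 ^ M * level (z M) - 2 ^ M * r0) with (2 ^ M * (level (z M) - r0)) by ring.
      rewrite Rabs_mult, (Rabs_right (2 ^ M)) by lra.
      apply (Rmult_lt_compat_l (2 ^ M)) in Hx; auto.
      replace (2 ^ M * (dm / 2 ^ M)) with dm in Hx by (field; lra). lra.
Qed.

Lemma Psit_homeo t : Jint t ->
  homeo_on nbA nbDh inA (fun z => Dhat phi fb t z /\ ~ Ihat phi t z) (Psit phi fb t).
Proof.
  intros Ht. split; [|split].
  - intros [p s] [Hp Hs]. split; [apply Dhat_Psit | apply not_Ihat_Psit]; auto.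
  - intros [p0 s0] [Hp0 Hs0] V [N [eps [Heps HV]]].
    destruct (Psit_coords_cont t p0 s0 Ht Hp0 Hs0 N eps Heps) as [d [Hd HF]].
    exists (fun a => dprod d2 dR (p0, s0) a < d). split; [apply nbM_ball; auto|].
    intros [p s] [Hp Hs] Ha. apply HV. apply Rmax_lt_iff in Ha as [H1 H2].
    intros n Hn. apply HF; auto. rewrite Rminus_diag, Rabs_R0. auto.
  - exists Psit_inv. split; [|split].
    + intros z [Hz HI]. split; [apply (Psit_inv_A t) | apply Psit_Psit_inv]; auto.
    + intros [p s] [Hp Hs]. apply Psit_inv_Psit; auto.
    + intros z [Hz HI] V [e [He HV]].
      destruct (Psit_inv_cont t z Ht Hz HI) as [M HM]. destruct (HM e He) as [d [Hd Hd']].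
      exists (fun z' => forall n, (n <= M)%nat -> d2 (z n) (z' n) < d).
      split; [exists M, d; split; auto|].
      intros z' [Hz' _] Hn. apply HV, (Hd' t); auto.
Qed.

Lemma PihatC_slice w : PihatC phi fb w ->
  Jint (snd (w O)) /\ Dhat phi fb (snd (w O)) (fun n => fst (w n)) /\
  ~ Ihat phi (snd (w O)) (fun n => fst (w n)) /\ w = iota (snd (w O)) (fun n => fst (w n)).
Proof.
  intros [Hw HC].
  assert (Hsnd : forall n, snd (w n) = snd (w O)).
  { induction n; auto. destruct (Hw n) as [_ [_ E]]. rewrite <- IHn, <- E. reflexivity. }
  assert (Ew : w = iota (snd (w O)) (fun n => fst (w n))).
  { apply functional_extensionality. intros n. unfold iota. rewrite <- (Hsnd n).
    apply surjective_pairing. }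
  assert (HD : Dhat phi fb (snd (w O)) (fun n => fst (w n))).
  { intros n. destruct (Hw n) as [H1 [_ E]]. split; auto.
    rewrite <- E. unfold Hbig. simpl. rewrite (Hsnd (S n)). reflexivity. }
  split; [apply (Hw O)|]. do 2 (split; auto).
  intros HI. apply HC. exists (snd (w O)), (fun n => fst (w n)). split; [apply (Hw O)|]. auto.
Qed.

Lemma Psi_slice b : inAJ b -> exists z, Dhat phi fb (snd b) z /\ Psi phi fb b = iota (snd b) z.
Proof.
  destruct b as [[p s] t]. intros [[Hp Hs] Ht]. exists (Psit phi fb t (p, s)).
  split; [apply Dhat_Psit | reflexivity]; auto.
Qed.

Lemma Psi_into b : inAJ b -> PihatC phi fb (Psi phi fb b).
Proof.
  destruct b as [[p s] t]. intros [[Hp Hs] Ht]. simpl in *. split.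
  - intros n. destruct (Dhat_Psit t p s Ht Hp Hs n) as [H1 H2].
    unfold Psi, iota, Hbig; simpl. rewrite H2. auto.
  - intros [t' [z [Ht' [Hz [HI E]]]]]. unfold Psi in E; simpl in E.
    assert (Et : t = t') by (apply (f_equal (fun w => snd (w O))) in E; auto). subst t'.
    assert (Ez : Psit phi fb t (p, s) = z).
    { apply functional_extensionality. intros n. apply (f_equal (fun w => fst (w n))) in E. auto. }
    apply (not_Ihat_Psit t p s Ht Hp Hs). rewrite Ez. auto.
Qed.

Definition Psi_inv (w : nat -> (R * R) * R) : ((R * R) * R) * R :=
  (Psit_inv (fun n => fst (w n)), snd (w O)).

Lemma Psi_homeo : homeo_on nbAJ nbPi inAJ (PihatC phi fb) (Psi phi fb).
Proof.
  split; [exact Psi_into|]. split.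
  - intros [[p0 s0] t0] [[Hp0 Hs0] Ht0] V [N [eps [Heps HV]]]. simpl in *.
    destruct (Psit_coords_cont t0 p0 s0 Ht0 Hp0 Hs0 N eps Heps) as [d [Hd HF]].
    pose proof (Rmin_l d eps). pose proof (Rmin_r d eps).
    exists (fun b => dprod (dprod d2 dR) dR ((p0, s0), t0) b < Rmin d eps).
    split; [apply nbM_ball, Rmin_pos; auto|].
    intros [[p s] t] [[Hp Hs] Ht] Hb. apply HV. intros n Hn.
    apply Rmax_lt_iff in Hb as [Hb Htt]. apply Rmax_lt_iff in Hb as [Hpp Hss].
    simpl in *. apply Rmax_lub_lt; simpl; [apply HF; auto; unfold dR in *; lra | lra].
  - exists Psi_inv. split; [|split].
    + intros w Hw. destruct (PihatC_slice w Hw) as [Ht [Hz [HI Ew]]].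
      split; [split; [apply (Psit_inv_A _ _ Ht Hz HI) | auto]|].
      unfold Psi, Psi_inv; simpl. rewrite Psit_Psit_inv; auto.
    + intros [[p s] t] [[Hp Hs] Ht]. unfold Psi_inv, Psi, iota; simpl.
      change (fun n : nat => Psit phi fb t (p, s) n) with (Psit phi fb t (p, s)).
      rewrite Psit_inv_Psit; auto.
    + intros w Hw V [e [He HV]].
      destruct (PihatC_slice w Hw) as [Ht [Hz [HI Ew]]].
      destruct (Psit_inv_cont _ _ Ht Hz HI) as [M HM]. destruct (HM e He) as [d [Hd Hd']].
      pose proof (Rmin_l d e). pose proof (Rmin_r d e).
      exists (fun w' => forall n, (n <= M)%nat -> dprod d2 dR (w n) (w' n) < Rmin d e).
      split; [exists M, (Rmin d e); split; [apply Rmin_pos|]; auto|].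
      intros w' Hw' Hn. apply HV. destruct (PihatC_slice w' Hw') as [Ht' [Hz' _]].
      pose proof (Hn M (le_n _)) as HnM. pose proof (Hn O ltac:(lia)) as Hn0.
      apply Rmax_lt_iff in HnM as [HnM _]. apply Rmax_lt_iff in Hn0 as [_ Hn0].
      apply Rmax_lub_lt; [apply (Hd' _ _ Ht' Hz'); lra | simpl; lra].
Qed.

End Unwrapping.

Theorem mainTheorem7 :
  forall (phi : R * R -> R -> R * R) (fb : R -> R * R -> R * R),
    cyl_embedding phi ->
    unwrapping phi fb ->
    (forall t p s, Jint t -> onS p -> 0 <= s <= 3/4 -> fb t (phi p s) = phi p s) ->
    homeo_on nbAJ nbPi inAJ (PihatC phi fb) (Psi phi fb) /\
    (forall b, inAJ b -> exists z, Dhat phi fb (snd b) z /\ Psi phi fb b = iota (snd b) z) /\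
    (forall t, Jint t ->
       homeo_on nbA nbDh inA (fun z => Dhat phi fb t z /\ ~ Ihat phi t z) (Psit phi fb t)).
Proof.
  intros phi fb Hphi Hunw Hid.
  split; [apply Psi_homeo; auto|].
  split; [apply Psi_slice; auto|].
  intros t Ht. apply Psit_homeo; auto.
Qed.
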